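(* For every $n$-dimensional (compact) polyhedron $P$ there is a natural number $m$ such that the cone over $P$ can be embedded in the product of $n+1$ copies of an $m$-od.
   Context: A polyhedron is the underlying space of a finite regular CW complex (equivalently, a finite simplicial complex). An $m$-od is the cone over an $m$-element set. *)

(* concrete Euclidean models, points of R^N are nat -> R
   vanishing at coordinates >= N. *)
From Stdlib Require Import Reals List.
Import ListNotations.
Open Scope R_scope.

Fixpoint rsum (k : nat) (f : nat -> R) : R :=
  match k with O => 0 | S k' => rsum k' f + f k' end.

Definition pt := nat -> R.
Definition zero_pt : pt := fun _ => 0.

Definition in_RN (N : nat) (x : pt) : Prop := forall i, (N <= i)%nat -> x i = 0.

(* l^1 distance on R^N (equivalent to the Euclidean metric) *)
Definition dist (N : nat) (x y : pt) : R := rsum N (fun i => Rabs (x i - y i)).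

Definition conv (s : list pt) (x : pt) : Prop :=
  exists w : nat -> R,
    (forall i, (i < length s)%nat -> 0 <= w i) /\
    rsum (length s) w = 1 /\
    forall j, x j = rsum (length s) (fun i => w i * nth i s zero_pt j).

Definition aff_indep (s : list pt) : Prop :=
  forall c : nat -> R,
    rsum (length s) c = 0 ->
    (forall j, rsum (length s) (fun i => c i * nth i s zero_pt j) = 0) ->
    forall i, (i < length s)%nat -> c i = 0.

(* A finite geometric simplicial complex in R^N: a list of simplices, each
   given by its (affinely independent) vertex list; closed under faces; any
   two simplices meet in their common face (possibly empty). *)
Definition is_complex (N : nat) (K : list (list pt)) : Prop :=
  (forall s, In s K -> s <> [] /\ aff_indep s /\ (forall v, In v s -> in_RN N v)) /\
  (forall s f, In s K -> f <> [] -> incl f s ->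
     exists t, In t K /\ forall v, In v t <-> In v f) /\
  (forall s t, In s K -> In t K ->
     exists u, (forall v, In v u <-> In v s /\ In v t) /\
               forall x, (conv s x /\ conv t x) <-> conv u x).

Definition complex_dim (K : list (list pt)) (n : nat) : Prop :=
  (exists s, In s K /\ length s = S n) /\
  (forall s, In s K -> (length s <= S n)%nat).

Definition polyhedron (K : list (list pt)) (x : pt) : Prop :=
  exists s, In s K /\ conv s x.

(* geometric cone over P ⊆ R^N inside R^(N+1): apex e_N, base P x {0} *)
Definition cone (N : nat) (P : pt -> Prop) (y : pt) : Prop :=
  exists x t, P x /\ 0 <= t <= 1 /\ y N = t /\
    (forall i, (i < N)%nat -> y i = (1 - t) * x i) /\
    (forall i, (N < i)%nat -> y i = 0).

(* the k-th block (coordinates k*m .. k*m+m-1) of y lies in the m-od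
   { t e_j : j < m, t in [0,1] } ⊆ R^m (cone over m points, apex 0) *)
Definition od_block (m k : nat) (y : pt) : Prop :=
  (forall i, (i < m)%nat -> y (k * m + i)%nat = 0) \/
  exists j t, (j < m)%nat /\ 0 <= t <= 1 /\
    forall i, (i < m)%nat -> y (k * m + i)%nat = if Nat.eqb i j then t else 0.

Definition od_prod (m n : nat) (y : pt) : Prop :=
  in_RN (m * (n + 1)) y /\ forall k, (k <= n)%nat -> od_block m k y.

Definition embeds (NA : nat) (A : pt -> Prop) (NB : nat) (B : pt -> Prop) : Prop :=
  exists f : pt -> pt,
    (forall x, A x -> B (f x)) /\
    (forall x y, A x -> A y -> (forall i, f x i = f y i) -> forall i, x i = y i) /\
    (forall x, A x -> forall eps, 0 < eps -> exists d, 0 < d /\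
       forall y, A y -> dist NA x y < d -> dist NB (f x) (f y) < eps) /\
    (forall x, A x -> forall eps, 0 < eps -> exists d, 0 < d /\
       forall y, A y -> dist NB (f x) (f y) < d -> dist NA x y < eps).

(* Enumerate the vertices of K as V = v_0, ..., v_{q-1}.  A cone point
   y = (1-t) x + t e_N with x in |K| has cone coordinates nu_i = (1-t) mu_i(x),
   where mu(x) are the barycentric coordinates of x; they are nonnegative, sum
   to 1-t and are supported on one simplex, hence on at most n+1 vertices.
   For every set J of vertices (a bitmask j < 2^q) put
       T_J(nu) = max(0, min(1, min_{i in J} nu_i) - max_{i notin J} nu_i).
   By the layer-cake identity  nu_i = sum_{J containing i} T_J(nu);  and
   T_J > 0 forces nu_a > nu_b for a in J, b notin J, so the J with T_J > 0 form
   a chain: at most one of each cardinality, and all have at most n+1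
   elements.  Writing T_J into slot J of the (|J|-1)-th factor gives a map f
   into the product of n+1 copies of the 2^q-od.  The linear map
   g(z) = e_N + sum_J z_J sum_{i in J} (v_i - e_N) satisfies g (f y) = y, and
   is Lipschitz; f is continuous because T is Lipschitz in nu and barycentric
   coordinates are continuous on |K| (they are affine on each simplex, via a
   dual basis, and simplices are closed). *)

From Stdlib Require Import Reals Lra Lia List Arith Classical ClassicalEpsilon
  FunctionalExtensionality.
Open Scope R_scope.

(** * Finite sums *)

Lemma rsum_ext k f g : (forall i, (i < k)%nat -> f i = g i) -> rsum k f = rsum k g.
Proof.
  induction k as [|k IH]; intros H; simpl; auto.
  rewrite IH by (intros; apply H; lia). rewrite H by lia. reflexivity.
Qed.

Lemma rsum_plus k f g : rsum k (fun i => f i + g i) = rsum k f + rsum k g.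
Proof. induction k as [|k IH]; simpl; [lra|]. rewrite IH; lra. Qed.

Lemma rsum_minus k f g : rsum k (fun i => f i - g i) = rsum k f - rsum k g.
Proof. induction k as [|k IH]; simpl; [lra|]. rewrite IH; lra. Qed.

Lemma rsum_scal k c f : rsum k (fun i => c * f i) = c * rsum k f.
Proof. induction k as [|k IH]; simpl; [lra|]. rewrite IH; lra. Qed.

Lemma rsum_scalr k c f : rsum k (fun i => f i * c) = rsum k f * c.
Proof. induction k as [|k IH]; simpl; [lra|]. rewrite IH; lra. Qed.

Lemma rsum_const k c : rsum k (fun _ => c) = INR k * c.
Proof. induction k as [|k IH]; cbn [rsum]; [simpl; lra|]. rewrite IH, S_INR; lra. Qed.

Lemma rsum_zero k f : (forall i, (i < k)%nat -> f i = 0) -> rsum k f = 0.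
Proof. intros H. rewrite (rsum_ext k f (fun _ => 0)), rsum_const; auto; lra. Qed.

Lemma rsum_le k f g : (forall i, (i < k)%nat -> f i <= g i) -> rsum k f <= rsum k g.
Proof.
  induction k as [|k IH]; intros H; simpl; [lra|].
  assert (f k <= g k) by (apply H; lia).
  assert (rsum k f <= rsum k g) by (apply IH; intros; apply H; lia). lra.
Qed.

Lemma rsum_nonneg k f : (forall i, (i < k)%nat -> 0 <= f i) -> 0 <= rsum k f.
Proof.
  intros H. replace 0 with (rsum k (fun _ => 0)) by (rewrite rsum_const; lra).
  apply rsum_le; auto.
Qed.

Lemma rsum_abs k f : Rabs (rsum k f) <= rsum k (fun i => Rabs (f i)).
Proof.
  induction k as [|k IH]; simpl; [rewrite Rabs_R0; lra|].
  eapply Rle_trans; [apply Rabs_triang|]. lra.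
Qed.

Lemma rsum_term_le k f i :
  (forall j, (j < k)%nat -> 0 <= f j) -> (i < k)%nat -> f i <= rsum k f.
Proof.
  revert i; induction k as [|k IH]; intros i Hf Hi; [lia|]. simpl.
  destruct (Nat.eq_dec i k) as [->|Hik].
  - assert (0 <= rsum k f) by (apply rsum_nonneg; intros; apply Hf; lia). lra.
  - assert (f i <= rsum k f) by (apply IH; [intros; apply Hf|]; lia).
    assert (0 <= f k) by (apply Hf; lia). lra.
Qed.

Lemma rsum_nonneg_zero k f :
  (forall i, (i < k)%nat -> 0 <= f i) -> rsum k f = 0 -> forall i, (i < k)%nat -> f i = 0.
Proof. intros Hf Hs i Hi. pose proof (rsum_term_le k f i Hf Hi). pose proof (Hf i Hi). lra. Qed.

Lemma rsum_nonzero k f : rsum k f <> 0 -> exists i, (i < k)%nat /\ f i <> 0.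
Proof.
  intros H. apply NNPP. intros Hno. apply H, rsum_zero.
  intros i Hi. apply NNPP. eauto.
Qed.

Lemma rsum_swap a b (F : nat -> nat -> R) :
  rsum a (fun i => rsum b (fun j => F i j)) = rsum b (fun j => rsum a (fun i => F i j)).
Proof.
  induction a as [|a IH]; simpl.
  - symmetry; apply rsum_zero; auto.
  - rewrite IH, <- rsum_plus. reflexivity.
Qed.

Lemma rsum_add_range a b f : rsum (a + b) f = rsum a f + rsum b (fun j => f (a + j)%nat).
Proof.
  induction b as [|b IH]; simpl; [rewrite Nat.add_0_r; lra|].
  rewrite Nat.add_succ_r. simpl. rewrite IH. lra.
Qed.

Lemma rsum_blocks m q f :
  rsum (m * q) f = rsum q (fun k => rsum m (fun j => f (k * m + j)%nat)).
Proof.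
  induction q as [|q IH]; simpl; [rewrite Nat.mul_0_r; auto|].
  replace (m * S q)%nat with (m * q + m)%nat by lia.
  rewrite rsum_add_range, IH. f_equal. apply rsum_ext; intros. f_equal. lia.
Qed.

Lemma rsum_single k f i0 :
  (i0 < k)%nat -> (forall i, (i < k)%nat -> i <> i0 -> f i = 0) -> rsum k f = f i0.
Proof.
  induction k as [|k IH]; intros Hi0 Hf; [lia|]. simpl.
  destruct (Nat.eq_dec i0 k) as [->|Hne].
  - rewrite rsum_zero; [lra|]. intros; apply Hf; lia.
  - rewrite IH, (Hf k); [lra|lia|auto|lia|intros; apply Hf; lia].
Qed.

Lemma rsum_delta k i a : (i < k)%nat -> rsum k (fun m => if Nat.eq_dec m i then a else 0) = a.
Proof.
  intros Hi. rewrite (rsum_single _ _ i Hi); [destruct (Nat.eq_dec i i); congruence|].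
  intros j _ Hj. destruct (Nat.eq_dec j i); congruence.
Qed.

Lemma list_delta (A : Type) (L : list A) (P : A -> R -> Prop) :
  (forall a d d', P a d -> 0 < d' <= d -> P a d') ->
  (forall a, In a L -> exists d, 0 < d /\ P a d) ->
  exists d, 0 < d /\ forall a, In a L -> P a d.
Proof.
  intros Hmon. induction L as [|a L IH]; intros H.
  - exists 1. split; [lra|]. intros _ [].
  - destruct IH as [d1 [Hd1 HP1]]; [intros; apply H; simpl; auto|].
    destruct (H a) as [d2 [Hd2 HP2]]; [simpl; auto|].
    exists (Rmin d1 d2). split; [apply Rmin_pos; auto|].
    intros b [<-|Hb].
    + apply (Hmon a d2); auto. split; [apply Rmin_pos; auto|apply Rmin_r].
    + apply (Hmon b d1); auto. split; [apply Rmin_pos; auto|apply Rmin_l].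
Qed.

Lemma sum_cont k (F : pt -> nat -> R) (Q : pt -> Prop) (ds : pt -> R) y :
  (forall i, (i < k)%nat -> forall eps, 0 < eps -> exists d, 0 < d /\
     forall y', Q y' -> ds y' < d -> Rabs (F y' i - F y i) < eps) ->
  forall eps, 0 < eps -> exists d, 0 < d /\
    forall y', Q y' -> ds y' < d -> rsum k (fun i => Rabs (F y i - F y' i)) < eps.
Proof.
  induction k as [|k IH]; intros H eps Heps.
  - exists 1. split; [lra|]. intros; simpl; auto.
  - destruct (IH (fun i Hi => H i ltac:(lia)) (eps / 2)) as [d1 [Hd1 H1]]; [lra|].
    destruct (H k ltac:(lia) (eps / 2)) as [d2 [Hd2 H2]]; [lra|].
    exists (Rmin d1 d2). split; [apply Rmin_pos; auto|]. intros y' Hy' Hd. simpl.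
    specialize (H1 y' Hy' (Rlt_le_trans _ _ _ Hd (Rmin_l _ _))).
    specialize (H2 y' Hy' (Rlt_le_trans _ _ _ Hd (Rmin_r _ _))).
    rewrite <- Rabs_Ropp in H2. replace (- (F y' k - F y k)) with (F y k - F y' k) in H2 by ring.
    lra.
Qed.

Lemma lipschitz_delta C eps : 0 <= C -> 0 < eps ->
  exists d, 0 < d /\ forall r, 0 <= r -> r < d -> C * r < eps.
Proof.
  intros HC Heps. exists (eps / (C + 1)). split; [apply Rdiv_lt_0_compat; lra|].
  intros r Hr Hrd. apply Rle_lt_trans with ((C + 1) * r); [nra|].
  apply (Rmult_lt_compat_l (C + 1)) in Hrd; [|lra].
  replace ((C + 1) * (eps / (C + 1))) with eps in Hrd by (field; lra). auto.
Qed.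

(** * Dual bases *)

Definition ip (D : nat) (u v : pt) : R := rsum D (fun l => u l * v l).

Definition indep (D q : nat) (w : nat -> pt) : Prop :=
  forall c : nat -> R, (forall l, (l < D)%nat -> rsum q (fun r => c r * w r l) = 0) ->
  forall r, (r < q)%nat -> c r = 0.

Definition in_span (q : nat) (w : nat -> pt) (u : pt) : Prop :=
  exists c : nat -> R, forall l, u l = rsum q (fun r => c r * w r l).

Lemma ip_sym D u v : ip D u v = ip D v u.
Proof. unfold ip; apply rsum_ext; intros; ring. Qed.

Lemma ip_ext D u u' v : (forall l, (l < D)%nat -> u l = u' l) -> ip D u v = ip D u' v.
Proof. intros H; unfold ip; apply rsum_ext; intros; rewrite H; auto. Qed.

Lemma ip_sub D u v w : ip D (fun l => u l - v l) w = ip D u w - ip D v w.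
Proof. unfold ip. rewrite <- rsum_minus. apply rsum_ext; intros; ring. Qed.

Lemma ip_scal D c u v : ip D (fun l => c * u l) v = c * ip D u v.
Proof. unfold ip. rewrite <- rsum_scal. apply rsum_ext; intros; ring. Qed.

Lemma ip_rsum D q a F w :
  ip D (fun l => rsum q (fun j => a j * F j l)) w = rsum q (fun j => a j * ip D (F j) w).
Proof.
  unfold ip. rewrite (rsum_ext D _ (fun l => rsum q (fun j => a j * (F j l * w l)))).
  - rewrite rsum_swap. apply rsum_ext; intros. apply rsum_scal.
  - intros. rewrite <- rsum_scalr. apply rsum_ext; intros; ring.
Qed.

Lemma span_ext q w u v : (forall l, u l = v l) -> in_span q w u -> in_span q w v.
Proof. intros E [c Hc]. exists c. intros l. rewrite <- E. apply Hc. Qed.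

Lemma span_zero q w : in_span q w (fun _ => 0).
Proof. exists (fun _ => 0). intros l. symmetry. apply rsum_zero. intros; ring. Qed.

Lemma span_lin q w u v a : in_span q w u -> in_span q w v -> in_span q w (fun l => u l + a * v l).
Proof.
  intros [c Hc] [c' Hc']. exists (fun r => c r + a * c' r). intros l.
  rewrite Hc, Hc', <- rsum_scal, <- rsum_plus. apply rsum_ext; intros; ring.
Qed.

Lemma span_sum q w k a (F : nat -> pt) :
  (forall j, (j < k)%nat -> in_span q w (F j)) ->
  in_span q w (fun l => rsum k (fun j => a j * F j l)).
Proof.
  induction k as [|k IH]; intros HF; [apply span_zero|].
  apply (span_lin q w _ _ (a k)); [apply IH; intros; apply HF; lia | apply HF; lia].
Qed.

Lemma span_widen q w u : in_span q w u -> in_span (S q) w u.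
Proof.
  intros [c Hc]. exists (fun r => if Nat.eq_dec r q then 0 else c r). intros l. simpl.
  rewrite Hc. destruct (Nat.eq_dec q q); [|congruence].
  rewrite Rmult_0_l, Rplus_0_r. apply rsum_ext. intros r Hr.
  destruct (Nat.eq_dec r q); [lia|auto].
Qed.

Lemma span_last q w : in_span (S q) w (w q).
Proof.
  exists (fun r => if Nat.eq_dec r q then 1 else 0). intros l.
  rewrite (rsum_single _ _ q); [destruct (Nat.eq_dec q q); [ring|congruence]|lia|].
  intros r _ Hr. destruct (Nat.eq_dec r q); [congruence|ring].
Qed.

Lemma ip_span_orth D q w e u :
  (forall r, (r < q)%nat -> ip D e (w r) = 0) -> in_span q w u -> ip D e u = 0.
Proof.
  intros Horth [c Hc]. rewrite ip_sym, (ip_ext D u (fun l => rsum q (fun r => c r * w r l)))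
    by auto.
  rewrite ip_rsum. apply rsum_zero. intros r Hr. rewrite ip_sym, Horth; auto; ring.
Qed.

Lemma indep_prefix D q w : indep D (S q) w -> indep D q w.
Proof.
  intros H c Hc r Hr.
  set (c' := fun t => if Nat.eq_dec t q then 0 else c t).
  assert (E : c' r = 0).
  { apply H; [|lia]. intros l Hl. simpl.
    replace (c' q) with 0 by (unfold c'; destruct (Nat.eq_dec q q); congruence).
    rewrite Rmult_0_l, Rplus_0_r, <- (Hc l Hl). apply rsum_ext. intros t Ht.
    unfold c'. destruct (Nat.eq_dec t q); [lia|auto]. }
  unfold c' in E. destruct (Nat.eq_dec r q); [lia|auto].
Qed.

Lemma indep_last D q w u :
  indep D (S q) w -> in_span q w u -> (forall l, (l < D)%nat -> w q l = u l) -> False.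
Proof.
  intros H [c Hc] Hu.
  set (c' := fun t => if Nat.eq_dec t q then -1 else c t).
  assert (E : c' q = 0).
  { apply H; [|lia]. intros l Hl. simpl.
    replace (c' q) with (-1) by (unfold c'; destruct (Nat.eq_dec q q); congruence).
    rewrite (rsum_ext q _ (fun r => c r * w r l)).
    - rewrite <- Hc, <- Hu; auto; ring.
    - intros t Ht. unfold c'. destruct (Nat.eq_dec t q); [lia|auto]. }
  unfold c' in E. destruct (Nat.eq_dec q q); [lra|congruence].
Qed.

Definition dual_family (D q : nat) (w psi : nat -> pt) : Prop :=
  (forall p, in_span q w (psi p)) /\
  forall p r, (p < q)%nat -> (r < q)%nat -> ip D (psi p) (w r) = if Nat.eqb p r then 1 else 0.

Section GramSchmidt.

Variables (D q : nat) (w psi : nat -> pt).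
Hypothesis Hind : indep D (S q) w.
Hypothesis Hspan : forall p, in_span q w (psi p).
Hypothesis Hdual : forall p r, (p < q)%nat -> (r < q)%nat ->
  ip D (psi p) (w r) = if Nat.eqb p r then 1 else 0.

(* The part of w_q orthogonal to w_0, ..., w_{q-1}. *)
Definition residual : pt :=
  fun l => w q l - rsum q (fun j => ip D (w q) (w j) * psi j l).

Lemma residual_proj_span : in_span q w (fun l => rsum q (fun j => ip D (w q) (w j) * psi j l)).
Proof. apply span_sum; auto. Qed.

Lemma residual_span : in_span (S q) w residual.
Proof.
  apply (span_ext _ _ (fun l => w q l + (-1) * rsum q (fun j => ip D (w q) (w j) * psi j l)));
    [intros; unfold residual; ring|].
  apply span_lin; [apply span_last|apply span_widen, residual_proj_span].
Qed.

Lemma residual_orth r : (r < q)%nat -> ip D residual (w r) = 0.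
Proof.
  intros Hr. unfold residual. rewrite ip_sub, ip_rsum, (rsum_single q _ r Hr).
  - rewrite Hdual, Nat.eqb_refl by auto. ring.
  - intros j Hj Hjr. rewrite Hdual by auto.
    replace (Nat.eqb j r) with false by (symmetry; apply Nat.eqb_neq; auto). ring.
Qed.

Lemma residual_last : ip D residual (w q) = ip D residual residual.
Proof.
  transitivity (ip D (fun l => w q l - rsum q (fun j => ip D (w q) (w j) * psi j l)) residual);
    [|reflexivity].
  rewrite ip_sub, (ip_sym D (w q)), (ip_sym D _ residual),
    (ip_span_orth D q w residual _ residual_orth residual_proj_span).
  ring.
Qed.

(* By independence, w_q is not in the span of the others, so e <> 0. *)
Lemma residual_nonzero : ip D residual residual <> 0.
Proof.
  intros E. apply (indep_last D q w _ Hind residual_proj_span). intros l Hl.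
  assert (Hsq : residual l * residual l = 0).
  { apply (rsum_nonneg_zero D (fun l => residual l * residual l)); auto.
    intros; apply Rle_0_sqr. }
  assert (residual l = 0) by nra. unfold residual in *. lra.
Qed.

(* Gram-Schmidt step: e / <e,e> is dual to w_q, and the old dual vectors are
   corrected along e. *)
Lemma dual_family_step : exists psi', dual_family D (S q) w psi'.
Proof.
  pose proof residual_nonzero as Hee. set (ee := ip D residual residual) in *.
  exists (fun p l => if Nat.eqb p q then / ee * residual l
                    else psi p l + (- (ip D (psi p) (w q) / ee)) * residual l).
  split.
  - intros p. destruct (Nat.eqb p q).
    + apply (span_ext _ _ (fun l => 0 + / ee * residual l)); [intros; ring|].
      apply span_lin; [apply span_zero|apply residual_span].
    + apply span_lin; [apply span_widen; auto|apply residual_span].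
  - intros p r Hp Hr. destruct (Nat.eqb p q) eqn:Epq.
    + apply Nat.eqb_eq in Epq; subst p. rewrite ip_scal.
      destruct (Nat.eq_dec r q) as [->|Hrq].
      * rewrite residual_last, Nat.eqb_refl. fold ee. field; auto.
      * rewrite residual_orth by lia.
        replace (Nat.eqb q r) with false by (symmetry; apply Nat.eqb_neq; lia). ring.
    + apply Nat.eqb_neq in Epq.
      rewrite (ip_ext D _ (fun l => psi p l - (ip D (psi p) (w q) / ee) * residual l))
        by (intros; ring).
      rewrite ip_sub, ip_scal. destruct (Nat.eq_dec r q) as [->|Hrq].
      * rewrite residual_last. fold ee.
        replace (Nat.eqb p q) with false by (symmetry; apply Nat.eqb_neq; auto).
        field; auto.
      * rewrite residual_orth, Hdual by lia. ring.
Qed.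

End GramSchmidt.

Lemma dual_basis D q w : indep D q w -> exists psi, dual_family D q w psi.
Proof.
  induction q as [|q IH]; intros Hind.
  - exists (fun _ _ => 0). split; [intros; apply span_zero | intros; lia].
  - destruct (IH (indep_prefix _ _ _ Hind)) as [psi [Hspan Hdual]].
    apply (dual_family_step D q w psi); auto.
Qed.

(** * Affine coordinates on a simplex are Lipschitz; simplices are closed *)

Lemma dist_nonneg D x y : 0 <= dist D x y.
Proof. unfold dist. apply rsum_nonneg. intros. apply Rabs_pos. Qed.

Lemma coord_le_dist D x y l : (l < D)%nat -> Rabs (x l - y l) <= dist D x y.
Proof.
  intros. unfold dist. apply (rsum_term_le D (fun i => Rabs (x i - y i))); auto.
  intros; apply Rabs_pos.
Qed.

Lemma dist_le_succ D x y : dist D x y <= dist (D + 1) x y.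
Proof.
  unfold dist. rewrite Nat.add_1_r. simpl. pose proof (Rabs_pos (x D - y D)). lra.
Qed.

(* x in R^N lifted to height 1 in R^(N+1): affine maps become linear. *)
Definition lift (N : nat) (x : pt) : pt := fun l => if Nat.eqb l N then 1 else x l.

Lemma ip_lift_lip N psi x y :
  Rabs (ip (S N) psi (lift N x) - ip (S N) psi (lift N y)) <=
  rsum (S N) (fun l => Rabs (psi l)) * dist N x y.
Proof.
  unfold ip. rewrite <- rsum_minus. eapply Rle_trans; [apply rsum_abs|].
  rewrite <- rsum_scalr. apply rsum_le. intros l Hl.
  rewrite <- Rmult_minus_distr_l, Rabs_mult. apply Rmult_le_compat_l; [apply Rabs_pos|].
  unfold lift. destruct (Nat.eqb l N) eqn:E.
  - rewrite Rminus_diag, Rabs_R0. apply dist_nonneg.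
  - apply Nat.eqb_neq in E. apply coord_le_dist. lia.
Qed.

Lemma lift_indep N s : aff_indep s -> (forall p, in_RN N (nth p s zero_pt)) ->
  indep (S N) (length s) (fun r => lift N (nth r s zero_pt)).
Proof.
  intros Hai HsN c Hc. apply Hai.
  - rewrite <- (Hc N) by lia. apply rsum_ext; intros. unfold lift. rewrite Nat.eqb_refl. ring.
  - intros j. destruct (lt_dec j N) as [Hj|Hj].
    + rewrite <- (Hc j) by lia. apply rsum_ext; intros. unfold lift.
      replace (Nat.eqb j N) with false by (symmetry; apply Nat.eqb_neq; lia). auto.
    + apply rsum_zero. intros r _. rewrite (HsN r j) by lia. ring.
Qed.

Lemma affine_coords N s : aff_indep s -> (forall p, in_RN N (nth p s zero_pt)) ->
  exists (lam : nat -> pt -> R) (C : R), 0 <= C /\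
    (forall p x y, (p < length s)%nat -> Rabs (lam p x - lam p y) <= C * dist N x y) /\
    (forall x w, rsum (length s) w = 1 ->
       (forall j, x j = rsum (length s) (fun r => w r * nth r s zero_pt j)) ->
       forall p, (p < length s)%nat -> lam p x = w p).
Proof.
  intros Hai HsN.
  destruct (dual_basis _ _ _ (lift_indep N s Hai HsN)) as [psi [_ Hdual]].
  cbv beta in Hdual.
  exists (fun p x => ip (S N) (psi p) (lift N x)).
  exists (rsum (length s) (fun p => rsum (S N) (fun l => Rabs (psi p l)))). split; [|split].
  - apply rsum_nonneg; intros. apply rsum_nonneg; intros. apply Rabs_pos.
  - intros p x y Hp. eapply Rle_trans; [apply ip_lift_lip|].
    apply Rmult_le_compat_r; [apply dist_nonneg|].
    apply (rsum_term_le _ (fun p => rsum (S N) (fun l => Rabs (psi p l)))); auto.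
    intros. apply rsum_nonneg; intros. apply Rabs_pos.
  - intros x w Hw1 Hx p Hp.
    rewrite ip_sym,
      (ip_ext _ _ (fun l => rsum (length s) (fun r => w r * lift N (nth r s zero_pt) l))).
    + rewrite ip_rsum, (rsum_single _ _ p Hp).
      * rewrite ip_sym, Hdual, Nat.eqb_refl by auto. ring.
      * intros r Hr Hrp. rewrite ip_sym, Hdual by auto.
        replace (Nat.eqb p r) with false by (symmetry; apply Nat.eqb_neq; lia). ring.
    + intros l _. unfold lift. destruct (Nat.eqb l N).
      * rewrite <- Hw1 at 1. apply rsum_ext; intros; ring.
      * apply Hx.
Qed.

Section Closed.

Variables (N : nat) (s : list pt) (lam : nat -> pt -> R) (C : R).
Hypothesis HsN : forall p, in_RN N (nth p s zero_pt).
Hypothesis HC : 0 <= C.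
Hypothesis Hlip : forall p x y, (p < length s)%nat -> Rabs (lam p x - lam p y) <= C * dist N x y.
Hypothesis Hcoord : forall x w, rsum (length s) w = 1 ->
  (forall j, x j = rsum (length s) (fun r => w r * nth r s zero_pt j)) ->
  forall p, (p < length s)%nat -> lam p x = w p.

(* How far z is from being the barycenter of the weights lam(z): the residual
   in R^N, the negative parts of the weights, and the defect of their total. *)
Definition bary_gap (z : pt) : R :=
  rsum N (fun j => Rabs (z j - rsum (length s) (fun p => lam p z * nth p s zero_pt j))).
Definition neg_mass (z : pt) : R := rsum (length s) (fun p => Rabs (lam p z) - lam p z).
Definition mass_gap (z : pt) : R := Rabs (1 - rsum (length s) (fun p => lam p z)).
Definition conv_defect (z : pt) : R := bary_gap z + neg_mass z + mass_gap z.

Lemma bary_gap_nonneg z : 0 <= bary_gap z.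
Proof. apply rsum_nonneg; intros; apply Rabs_pos. Qed.

Lemma neg_mass_nonneg z : 0 <= neg_mass z.
Proof. apply rsum_nonneg; intros p _; pose proof (Rle_abs (lam p z)); lra. Qed.

Lemma conv_defect_nonneg z : 0 <= conv_defect z.
Proof.
  pose proof (bary_gap_nonneg z). pose proof (neg_mass_nonneg z).
  pose proof (Rabs_pos (1 - rsum (length s) (fun p => lam p z))).
  unfold conv_defect, mass_gap. lra.
Qed.

Lemma conv_defect_conv z : conv s z -> conv_defect z = 0.
Proof.
  intros [w [Hw [Hw1 Hz]]]. pose proof (Hcoord z w Hw1 Hz) as Hl.
  assert (E1 : rsum N (fun j => Rabs (z j - rsum (length s)
                 (fun p => lam p z * nth p s zero_pt j))) = 0).
  { apply rsum_zero. intros j _.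
    rewrite (rsum_ext _ _ (fun r => w r * nth r s zero_pt j)) by (intros; rewrite Hl; auto).
    rewrite <- Hz, Rminus_diag. apply Rabs_R0. }
  assert (E2 : rsum (length s) (fun p => Rabs (lam p z) - lam p z) = 0).
  { apply rsum_zero. intros p Hp. rewrite Hl, Rabs_right by (auto; apply Rle_ge, Hw; auto). ring. }
  assert (E3 : rsum (length s) (fun p => lam p z) = 1) by (rewrite <- Hw1; apply rsum_ext; auto).
  unfold conv_defect, bary_gap, neg_mass, mass_gap. rewrite E1, E2, E3, Rminus_diag, Rabs_R0.
  ring.
Qed.

Lemma Rabs_eq_0 a : Rabs a = 0 -> a = 0.
Proof. intros H. destruct (Req_dec a 0); auto. exfalso; apply (Rabs_no_R0 a); auto. Qed.

Lemma conv_defect_zero z : in_RN N z -> conv_defect z = 0 -> conv s z.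
Proof.
  intros HzN E. pose proof (bary_gap_nonneg z). pose proof (neg_mass_nonneg z).
  pose proof (Rabs_pos (1 - rsum (length s) (fun p => lam p z))).
  unfold conv_defect, mass_gap in E.
  assert (Eg : bary_gap z = 0) by lra. assert (En : neg_mass z = 0) by lra.
  assert (Em : Rabs (1 - rsum (length s) (fun p => lam p z)) = 0) by lra.
  exists (fun p => lam p z). split; [|split].
  - intros p Hp.
    assert (Hp0 : Rabs (lam p z) - lam p z = 0).
    { apply (rsum_nonneg_zero (length s) (fun p => Rabs (lam p z) - lam p z)); auto.
      intros k _. pose proof (Rle_abs (lam k z)). lra. }
    destruct (Rcase_abs (lam p z)); [rewrite Rabs_left in Hp0|]; lra.
  - apply Rabs_eq_0 in Em. lra.
  - intros j. destruct (lt_dec j N) as [Hj|Hj].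
    + apply (rsum_nonneg_zero N _ (fun j _ => Rabs_pos _) Eg j), Rabs_eq_0 in Hj. lra.
    + rewrite HzN by lia. symmetry. apply rsum_zero. intros p _. rewrite (HsN p j) by lia. ring.
Qed.

Lemma lam_sum_lip x y :
  rsum (length s) (fun p => Rabs (lam p x - lam p y)) <= INR (length s) * C * dist N x y.
Proof.
  rewrite Rmult_assoc, <- rsum_const. apply rsum_le. intros p Hp. apply Hlip; auto.
Qed.

Lemma bary_gap_lip x y : bary_gap x <= bary_gap y +
  (1 + C * rsum N (fun j => rsum (length s) (fun p => Rabs (nth p s zero_pt j)))) * dist N x y.
Proof.
  set (d := dist N x y). unfold bary_gap.
  apply Rle_trans with (rsum N (fun j =>
    Rabs (y j - rsum (length s) (fun p => lam p y * nth p s zero_pt j))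
    + (Rabs (x j - y j) + rsum (length s) (fun p => Rabs (nth p s zero_pt j)) * (C * d)))).
  - apply rsum_le. intros j Hj.
    assert (Esplit : rsum (length s) (fun p => (lam p x - lam p y) * nth p s zero_pt j)
      = rsum (length s) (fun p => lam p x * nth p s zero_pt j)
        - rsum (length s) (fun p => lam p y * nth p s zero_pt j))
      by (rewrite <- rsum_minus; apply rsum_ext; intros; ring).
    replace (x j - rsum (length s) (fun p => lam p x * nth p s zero_pt j)) with
      ((y j - rsum (length s) (fun p => lam p y * nth p s zero_pt j)) + (x j - y j)
       - rsum (length s) (fun p => (lam p x - lam p y) * nth p s zero_pt j))
      by (rewrite Esplit; ring).
    eapply Rle_trans; [apply Rabs_triang|]. rewrite Rabs_Ropp.
    pose proof (Rabs_triang (y j - rsum (length s) (fun p => lam p y * nth p s zero_pt j))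
                            (x j - y j)) as Htri.
    enough (Rabs (rsum (length s) (fun p => (lam p x - lam p y) * nth p s zero_pt j))
            <= rsum (length s) (fun p => Rabs (nth p s zero_pt j)) * (C * d)) by lra.
    eapply Rle_trans; [apply rsum_abs|]. rewrite <- rsum_scalr. apply rsum_le. intros p Hp.
    rewrite Rabs_mult, Rmult_comm. apply Rmult_le_compat_l; [apply Rabs_pos|apply Hlip; auto].
  - rewrite !rsum_plus, rsum_scalr. unfold d, dist. lra.
Qed.

Lemma neg_mass_lip x y : neg_mass x <= neg_mass y + 2 * (INR (length s) * C) * dist N x y.
Proof.
  unfold neg_mass. pose proof (lam_sum_lip x y) as Hl.
  apply Rle_trans with (rsum (length s) (fun p => Rabs (lam p y) - lam p y
                                                 + 2 * Rabs (lam p x - lam p y))).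
  - apply rsum_le. intros p _.
    pose proof (Rabs_triang (lam p y) (lam p x - lam p y)) as Htri.
    replace (lam p y + (lam p x - lam p y)) with (lam p x) in Htri by ring.
    pose proof (Rle_abs (- (lam p x - lam p y))) as Hneg. rewrite Rabs_Ropp in Hneg. lra.
  - rewrite rsum_plus, rsum_scal. lra.
Qed.

Lemma mass_gap_lip x y : mass_gap x <= mass_gap y + (INR (length s) * C) * dist N x y.
Proof.
  unfold mass_gap. pose proof (lam_sum_lip x y) as Hl.
  replace (1 - rsum (length s) (fun p => lam p x)) with
    ((1 - rsum (length s) (fun p => lam p y)) - rsum (length s) (fun p => lam p x - lam p y))
    by (rewrite rsum_minus; ring).
  eapply Rle_trans; [apply Rabs_triang|]. rewrite Rabs_Ropp.
  pose proof (rsum_abs (length s) (fun p => lam p x - lam p y)). lra.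
Qed.

Lemma conv_defect_lip : exists L, 0 < L /\
  forall x y, conv_defect x <= conv_defect y + L * dist N x y.
Proof.
  set (S1 := rsum N (fun j => rsum (length s) (fun p => Rabs (nth p s zero_pt j)))).
  set (Cq := INR (length s) * C).
  assert (HS1 : 0 <= S1) by (apply rsum_nonneg; intros; apply rsum_nonneg; intros; apply Rabs_pos).
  assert (HCq : 0 <= Cq) by (apply Rmult_le_pos; [apply pos_INR|auto]).
  exists (1 + C * S1 + 3 * Cq). split; [pose proof (Rmult_le_pos _ _ HC HS1); lra|].
  intros x y. pose proof (bary_gap_lip x y) as H1. pose proof (neg_mass_lip x y) as H2.
  pose proof (mass_gap_lip x y) as H3. fold S1 Cq in H1, H2, H3. unfold conv_defect.
  pose proof (dist_nonneg N x y). nra.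
Qed.

Lemma conv_closed x : in_RN N x -> ~ conv s x ->
  exists d, 0 < d /\ forall y, dist N x y < d -> ~ conv s y.
Proof.
  intros HxN Hnc. destruct conv_defect_lip as [L [HL Hdef]].
  assert (Hpos : 0 < conv_defect x).
  { destruct (Rle_lt_or_eq_dec _ _ (conv_defect_nonneg x)) as [|E]; auto.
    exfalso. apply Hnc, conv_defect_zero; auto. }
  exists (conv_defect x / L). split; [apply Rdiv_lt_0_compat; auto|].
  intros y Hd Hy. specialize (Hdef x y). rewrite (conv_defect_conv y Hy) in Hdef.
  apply (Rmult_lt_compat_l L) in Hd; auto.
  replace (L * (conv_defect x / L)) with (conv_defect x) in Hd by (field; lra). lra.
Qed.

End Closed.

(** * The chain decomposition of a nonnegative vector *)

(* Subsets of {0, ..., q-1} are bitmasks j < 2^q; i is in j iff bit i of j is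
   set. *)
Fixpoint min_in (nu : nat -> R) (p j : nat) (c : R) : R :=
  match p with
  | O => c
  | S p' => if Nat.testbit j p' then Rmin (nu p') (min_in nu p' j c) else min_in nu p' j c
  end.

Fixpoint max_out (nu : nat -> R) (p j : nat) : R :=
  match p with
  | O => 0
  | S p' => if Nat.testbit j p' then max_out nu p' j else Rmax (nu p') (max_out nu p' j)
  end.

Fixpoint card_bits (p j : nat) : nat :=
  match p with
  | O => O
  | S p' => ((if Nat.testbit j p' then 1 else 0) + card_bits p' j)%nat
  end.

Definition slab (c : R) (nu : nat -> R) (p j : nat) : R :=
  Rmax 0 (min_in nu p j c - max_out nu p j).

Definition layer (nu : nat -> R) (q j : nat) : R := slab 1 nu q j.

Lemma bit_above j p i : (j < 2 ^ p)%nat -> (p <= i)%nat -> Nat.testbit j i = false.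
Proof.
  intros. rewrite <- (Nat.mod_small j (2 ^ p)) by auto. apply Nat.mod_pow2_bits_high. lia.
Qed.

Lemma bit_add_low j p i :
  (j < 2 ^ p)%nat -> (i < p)%nat -> Nat.testbit (j + 2 ^ p) i = Nat.testbit j i.
Proof.
  intros Hj Hi. rewrite <- (Nat.mod_pow2_bits_low _ p) by auto.
  replace ((j + 2 ^ p) mod 2 ^ p)%nat with j; auto.
  rewrite <- (Nat.mul_1_l (2 ^ p)) at 1. rewrite Nat.Div0.mod_add, Nat.mod_small; auto.
Qed.

Lemma bit_add_top j p : (j < 2 ^ p)%nat -> Nat.testbit (j + 2 ^ p) p = true.
Proof. intros. apply (Nat.testbit_unique _ _ _ j 0); auto. Qed.

Lemma rsum_pow2 p f :
  rsum (2 ^ S p) f = rsum (2 ^ p) f + rsum (2 ^ p) (fun j => f (j + 2 ^ p)%nat).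
Proof.
  replace (2 ^ S p)%nat with (2 ^ p + 2 ^ p)%nat by (simpl; lia).
  rewrite rsum_add_range. f_equal. apply rsum_ext; intros. f_equal. lia.
Qed.

Lemma min_in_bits nu p j j' c : (forall i, (i < p)%nat -> Nat.testbit j i = Nat.testbit j' i) ->
  min_in nu p j c = min_in nu p j' c.
Proof.
  induction p as [|p IH]; intros H; simpl; auto.
  rewrite (H p) by lia. rewrite IH by (intros; apply H; lia). auto.
Qed.

Lemma max_out_bits nu p j j' : (forall i, (i < p)%nat -> Nat.testbit j i = Nat.testbit j' i) ->
  max_out nu p j = max_out nu p j'.
Proof.
  induction p as [|p IH]; intros H; simpl; auto.
  rewrite (H p) by lia. rewrite IH by (intros; apply H; lia). auto.
Qed.

Lemma min_in_Rmin nu p j a c : Rmin a (min_in nu p j c) = min_in nu p j (Rmin a c).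
Proof.
  induction p as [|p IH]; simpl; auto. destruct (Nat.testbit j p); auto.
  rewrite <- IH, !Rmin_assoc, (Rmin_comm a (nu p)). auto.
Qed.

Lemma slab_low c nu p j : (j < 2 ^ p)%nat ->
  min_in nu (S p) j c = min_in nu p j c /\ max_out nu (S p) j = Rmax (nu p) (max_out nu p j).
Proof. intros Hj. simpl. rewrite (bit_above j p p) by auto. auto. Qed.

Lemma slab_high c nu p j : (j < 2 ^ p)%nat ->
  slab c nu (S p) (j + 2 ^ p) = slab (Rmin (nu p) c) nu p j.
Proof.
  intros Hj. unfold slab. simpl. rewrite bit_add_top by auto.
  rewrite (min_in_bits nu p (j + 2 ^ p) j), (max_out_bits nu p (j + 2 ^ p) j), min_in_Rmin;
    auto; intros; apply bit_add_low; auto.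
Qed.

Lemma Rmax_Rmin_split A B v :
  Rmax 0 (A - Rmax v B) + Rmax 0 (Rmin v A - B) = Rmax 0 (A - B).
Proof.
  unfold Rmax, Rmin. destruct (Rle_dec v B), (Rle_dec v A);
  repeat match goal with |- context [Rle_dec ?a ?b] => destruct (Rle_dec a b) end; lra.
Qed.

Lemma slab_split c nu p j : (j < 2 ^ p)%nat ->
  slab c nu (S p) j + slab c nu (S p) (j + 2 ^ p) = slab c nu p j.
Proof.
  intros Hj. rewrite slab_high by auto. destruct (slab_low c nu p j Hj) as [E1 E2].
  unfold slab. rewrite E1, E2, <- min_in_Rmin. apply Rmax_Rmin_split.
Qed.

Lemma slab_total nu p c : 0 <= c -> rsum (2 ^ p) (fun j => slab c nu p j) = c.
Proof.
  revert c; induction p as [|p IH]; intros c Hc.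
  - simpl. unfold slab, Rmax. simpl. destruct (Rle_dec 0 (c - 0)); lra.
  - rewrite rsum_pow2, <- rsum_plus. transitivity (rsum (2 ^ p) (fun j => slab c nu p j));
      [|apply IH; auto].
    apply rsum_ext. intros. apply slab_split; auto.
Qed.

Lemma slab_cake nu p v c : (v < p)%nat -> 0 <= c -> 0 <= nu v ->
  rsum (2 ^ p) (fun j => if Nat.testbit j v then slab c nu p j else 0) = Rmin (nu v) c.
Proof.
  intros Hv Hc Hnu. induction p as [|p IH]; [lia|].
  rewrite rsum_pow2. destruct (Nat.eq_dec v p) as [->|Hvp].
  - rewrite (rsum_zero _ (fun j => if Nat.testbit j p then slab c nu (S p) j else 0))
      by (intros j Hj; rewrite (bit_above j p p); auto).
    rewrite Rplus_0_l.
    transitivity (rsum (2 ^ p) (fun j => slab (Rmin (nu p) c) nu p j));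
      [|apply slab_total, Rmin_glb; auto].
    apply rsum_ext. intros j Hj. rewrite bit_add_top, slab_high; auto.
  - rewrite <- IH, <- rsum_plus by lia. apply rsum_ext. intros j Hj.
    rewrite bit_add_low by (auto; lia).
    destruct (Nat.testbit j v); [apply slab_split; auto | ring].
Qed.

(* For coordinates in [0, 1] the cap 1 is inactive. *)
Lemma layer_cake nu q v : (v < q)%nat -> 0 <= nu v <= 1 ->
  rsum (2 ^ q) (fun j => if Nat.testbit j v then layer nu q j else 0) = nu v.
Proof.
  intros. unfold layer. rewrite slab_cake by (auto; lra).
  unfold Rmin. destruct (Rle_dec (nu v) 1); lra.
Qed.

Lemma min_in_le nu p j c a : (a < p)%nat -> Nat.testbit j a = true -> min_in nu p j c <= nu a.
Proof.
  induction p as [|p IH]; intros Ha Hb; [lia|]. simpl. destruct (Nat.eq_dec a p) as [->|Hap].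
  - rewrite Hb. apply Rmin_l.
  - destruct (Nat.testbit j p); [eapply Rle_trans; [apply Rmin_r|]|]; apply IH; auto; lia.
Qed.

Lemma max_out_ge nu p j b : (b < p)%nat -> Nat.testbit j b = false -> nu b <= max_out nu p j.
Proof.
  induction p as [|p IH]; intros Hb Hbit; [lia|]. simpl. destruct (Nat.eq_dec b p) as [->|Hbp].
  - rewrite Hbit. apply Rmax_l.
  - destruct (Nat.testbit j p); [|eapply Rle_trans; [|apply Rmax_r]]; apply IH; auto; lia.
Qed.

Lemma max_out_nonneg nu p j : 0 <= max_out nu p j.
Proof.
  induction p as [|p IH]; simpl; [lra|].
  destruct (Nat.testbit j p); [auto|eapply Rle_trans; [apply IH|apply Rmax_r]].
Qed.

Lemma min_in_le_cap nu p j c : min_in nu p j c <= c.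
Proof.
  induction p as [|p IH]; simpl; [lra|].
  destruct (Nat.testbit j p); [eapply Rle_trans; [apply Rmin_r|]|]; auto.
Qed.

Lemma layer_range nu q j : 0 <= layer nu q j <= 1.
Proof.
  unfold layer, slab. pose proof (min_in_le_cap nu q j 1). pose proof (max_out_nonneg nu q j).
  unfold Rmax. destruct (Rle_dec 0 _); lra.
Qed.

Lemma layer_pos_sep nu q j a b : 0 < layer nu q j -> (a < q)%nat -> (b < q)%nat ->
  Nat.testbit j a = true -> Nat.testbit j b = false -> nu b < nu a.
Proof.
  intros Hpos Ha Hb Hja Hjb. unfold layer, slab in Hpos.
  pose proof (min_in_le nu q j 1 a Ha Hja). pose proof (max_out_ge nu q j b Hb Hjb).
  unfold Rmax in Hpos. destruct (Rle_dec 0 _); lra.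
Qed.

Lemma layer_pos_bit nu q j a : 0 < layer nu q j -> (a < q)%nat -> Nat.testbit j a = true ->
  0 < nu a.
Proof.
  intros Hpos Ha Hja. unfold layer, slab in Hpos.
  pose proof (min_in_le nu q j 1 a Ha Hja). pose proof (max_out_nonneg nu q j).
  unfold Rmax in Hpos. destruct (Rle_dec 0 _); lra.
Qed.

Lemma Rmin_lip a b a' b' : Rabs (Rmin a b - Rmin a' b') <= Rabs (a - a') + Rabs (b - b').
Proof.
  unfold Rmin. destruct (Rle_dec a b), (Rle_dec a' b');
  repeat match goal with |- context [Rabs ?x] =>
    destruct (Rcase_abs x); [rewrite (Rabs_left x) by auto | rewrite (Rabs_right x) by auto]
  end; lra.
Qed.

Lemma Rmax_lip a b a' b' : Rabs (Rmax a b - Rmax a' b') <= Rabs (a - a') + Rabs (b - b').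
Proof.
  unfold Rmax. destruct (Rle_dec a b), (Rle_dec a' b');
  repeat match goal with |- context [Rabs ?x] =>
    destruct (Rcase_abs x); [rewrite (Rabs_left x) by auto | rewrite (Rabs_right x) by auto]
  end; lra.
Qed.

Lemma min_in_lip nu nu' p j c :
  Rabs (min_in nu p j c - min_in nu' p j c) <= rsum p (fun i => Rabs (nu i - nu' i)).
Proof.
  induction p as [|p IH]; simpl; [rewrite Rminus_diag, Rabs_R0; lra|].
  pose proof (Rabs_pos (nu p - nu' p)).
  destruct (Nat.testbit j p); [eapply Rle_trans; [apply Rmin_lip|]|]; lra.
Qed.

Lemma max_out_lip nu nu' p j :
  Rabs (max_out nu p j - max_out nu' p j) <= rsum p (fun i => Rabs (nu i - nu' i)).
Proof.
  induction p as [|p IH]; simpl; [rewrite Rminus_diag, Rabs_R0; lra|].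
  pose proof (Rabs_pos (nu p - nu' p)).
  destruct (Nat.testbit j p); [|eapply Rle_trans; [apply Rmax_lip|]]; lra.
Qed.

Lemma layer_lip nu nu' q j :
  Rabs (layer nu q j - layer nu' q j) <= 2 * rsum q (fun i => Rabs (nu i - nu' i)).
Proof.
  unfold layer, slab. eapply Rle_trans; [apply Rmax_lip|].
  rewrite Rminus_diag, Rabs_R0.
  pose proof (min_in_lip nu nu' q j 1). pose proof (max_out_lip nu nu' q j).
  pose proof (Rabs_triang (min_in nu q j 1 - min_in nu' q j 1)
                          (- (max_out nu q j - max_out nu' q j))).
  rewrite Rabs_Ropp in *.
  replace (min_in nu q j 1 - max_out nu q j - (min_in nu' q j 1 - max_out nu' q j)) with
    ((min_in nu q j 1 - min_in nu' q j 1) + - (max_out nu q j - max_out nu' q j)) by ring.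
  lra.
Qed.

Lemma card_bits_incl p j j' :
  (forall i, (i < p)%nat -> Nat.testbit j i = true -> Nat.testbit j' i = true) ->
  card_bits p j = card_bits p j' -> forall i, (i < p)%nat -> Nat.testbit j i = Nat.testbit j' i.
Proof.
  induction p as [|p IH]; intros Hsub Hcard i Hi; [lia|].
  assert (Hle : forall r, (r <= p)%nat -> (card_bits r j <= card_bits r j')%nat).
  { induction r as [|r IHr]; intros Hr; simpl; auto. specialize (IHr ltac:(lia)).
    destruct (Nat.testbit j r) eqn:E; [rewrite (Hsub r) by (auto; lia)|destruct (Nat.testbit j' r)];
      lia. }
  specialize (Hle p (le_n p)). simpl in Hcard.
  destruct (Nat.eq_dec i p) as [->|Hip].
  - destruct (Nat.testbit j p) eqn:E1, (Nat.testbit j' p) eqn:E2; auto; [|lia].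
    rewrite (Hsub p) in E2; auto; congruence.
  - apply IH; [intros; apply Hsub; auto; lia | | lia].
    destruct (Nat.testbit j p) eqn:E1, (Nat.testbit j' p) eqn:E2; try lia.
    rewrite (Hsub p) in E2; auto; congruence.
Qed.

Lemma bits_differ q j j' : (j < 2 ^ q)%nat -> (j' < 2 ^ q)%nat -> j <> j' ->
  exists i, (i < q)%nat /\ Nat.testbit j i <> Nat.testbit j' i.
Proof.
  intros Hj Hj' Hne. apply NNPP. intros Hn. apply Hne, Nat.bits_inj. intros i.
  destruct (lt_dec i q) as [Hi|Hi].
  - apply NNPP. eauto.
  - rewrite !(bit_above _ q) by (auto; lia). auto.
Qed.

(* The subsets of positive weight form a chain, so distinct ones have
   distinct sizes. *)
Lemma layer_chain nu q j j' : (j < 2 ^ q)%nat -> (j' < 2 ^ q)%nat -> j <> j' ->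
  card_bits q j = card_bits q j' -> 0 < layer nu q j -> 0 < layer nu q j' -> False.
Proof.
  intros Hj Hj' Hne Hcard Hpos Hpos'.
  destruct (bits_differ q j j' Hj Hj' Hne) as [i0 [Hi0 Hd]].
  assert (Ha : exists a, (a < q)%nat /\ Nat.testbit j a = true /\ Nat.testbit j' a = false).
  { apply NNPP. intros Hn. apply Hd, (card_bits_incl q j j'); auto.
    intros i Hi Hb. destruct (Nat.testbit j' i) eqn:E; eauto. exfalso; eauto. }
  assert (Hb : exists b, (b < q)%nat /\ Nat.testbit j' b = true /\ Nat.testbit j b = false).
  { apply NNPP. intros Hn. apply Hd. symmetry. apply (card_bits_incl q j' j); auto.
    intros i Hi Hb. destruct (Nat.testbit j i) eqn:E; eauto. exfalso; eauto. }
  destruct Ha as [a [Ha [Ha1 Ha2]]], Hb as [b [Hb [Hb1 Hb2]]].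
  pose proof (layer_pos_sep nu q j a b Hpos Ha Hb Ha1 Hb2).
  pose proof (layer_pos_sep nu q j' b a Hpos' Hb Ha Hb1 Ha2). lra.
Qed.

Lemma card_bits_le p j (ind : nat -> R) :
  (forall a, (a < p)%nat -> Nat.testbit j a = true -> ind a = 1) -> (forall a, 0 <= ind a) ->
  INR (card_bits p j) <= rsum p ind.
Proof.
  induction p as [|p IH]; intros Hbits Hnn; simpl; [lra|]. rewrite plus_INR.
  specialize (IH (fun a Ha => Hbits a ltac:(lia)) Hnn).
  destruct (Nat.testbit j p) eqn:E; [rewrite (Hbits p) by auto|pose proof (Hnn p)]; simpl; lra.
Qed.

Lemma card_bits_zero p j : card_bits p j = 0%nat -> forall i, (i < p)%nat -> Nat.testbit j i = false.
Proof.
  induction p as [|p IH]; intros H i Hi; [lia|]. simpl in H.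
  destruct (Nat.testbit j p) eqn:E; [simpl in H; lia|].
  destruct (Nat.eq_dec i p) as [->|]; auto. apply IH; auto; lia.
Qed.

(** * Barycentric coordinates on a simplicial complex *)

Definition vertex_list (N : nat) (K : list (list pt)) (V : list pt) : Prop :=
  is_complex N K /\ NoDup V /\ (forall s v, In s K -> In v s -> In v V) /\
  (forall v, In v V -> in_RN N v).

Lemma vertex_list_exists N K : is_complex N K -> exists V, vertex_list N K V.
Proof.
  intros HK. set (dec := fun u v : pt => excluded_middle_informative (u = v)).
  exists (nodup dec (concat K)). split; [auto|split; [|split]].
  - apply NoDup_nodup.
  - intros s v Hs Hv. apply nodup_In, in_concat. eauto.
  - intros v Hv. apply nodup_In, in_concat in Hv. destruct Hv as [s [Hs Hvs]].
    apply (proj1 HK s Hs); auto.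
Qed.

Definition conv_weights (s : list pt) (w : nat -> R) (x : pt) : Prop :=
  (forall i, (i < length s)%nat -> 0 <= w i) /\ rsum (length s) w = 1 /\
  forall j, x j = rsum (length s) (fun i => w i * nth i s zero_pt j).

Lemma aff_indep_nodup s : aff_indep s -> NoDup s.
Proof.
  intros H. apply (NoDup_nth s zero_pt). intros i j Hi Hj Heq.
  destruct (Nat.eq_dec i j) as [|Hij]; auto. exfalso.
  set (d := fun k m => if Nat.eq_dec m k then 1 else 0).
  assert (Hc : d i i - d j i = 0).
  { apply (H (fun m => d i m - d j m)); auto.
    - rewrite rsum_minus. unfold d. rewrite !rsum_delta; auto. ring.
    - intros l. rewrite (rsum_ext _ _ (fun m => (if Nat.eq_dec m i then nth i s zero_pt l else 0)
                                       - (if Nat.eq_dec m j then nth j s zero_pt l else 0))).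
      + rewrite rsum_minus, !rsum_delta, Heq; auto. ring.
      + intros m _. unfold d. destruct (Nat.eq_dec m i), (Nat.eq_dec m j); subst; ring. }
  unfold d in Hc. destruct (Nat.eq_dec i i), (Nat.eq_dec i j); try congruence. lra.
Qed.

Definition ind_eq (u v : pt) : R := if excluded_middle_informative (u = v) then 1 else 0.

Lemma ind_eq_sym u v : ind_eq u v = ind_eq v u.
Proof.
  unfold ind_eq. destruct (excluded_middle_informative (u = v)),
    (excluded_middle_informative (v = u)); congruence.
Qed.

Lemma ind_eq_nonneg u v : 0 <= ind_eq u v.
Proof. unfold ind_eq; destruct (excluded_middle_informative _); lra. Qed.

Lemma ind_eq_nonzero u v : ind_eq u v <> 0 -> u = v.
Proof. unfold ind_eq; destruct (excluded_middle_informative _); auto; lra. Qed.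

Lemma sum_ind_eq (L : list pt) p0 F : NoDup L -> (p0 < length L)%nat ->
  rsum (length L) (fun p => ind_eq (nth p L zero_pt) (nth p0 L zero_pt) * F p) = F p0.
Proof.
  intros HL Hp0. rewrite (rsum_single _ _ p0 Hp0).
  - unfold ind_eq. destruct (excluded_middle_informative _); [ring|congruence].
  - intros p Hp Hne. unfold ind_eq. destruct (excluded_middle_informative _) as [E|]; [|ring].
    exfalso. apply Hne, (proj1 (NoDup_nth L zero_pt) HL); auto.
Qed.

(* Weights indexed by the positions in a simplex s, moved to the positions in
   V, and back. *)
Definition spread (V s : list pt) (w : nat -> R) (i : nat) : R :=
  rsum (length s) (fun p => ind_eq (nth p s zero_pt) (nth i V zero_pt) * w p).
Definition restrict (V s : list pt) (c : nat -> R) (p : nat) : R :=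
  rsum (length V) (fun i => ind_eq (nth i V zero_pt) (nth p s zero_pt) * c i).

Definition supported (V : list pt) (c : nat -> R) (s : list pt) : Prop :=
  forall i, (i < length V)%nat -> c i <> 0 -> In (nth i V zero_pt) s.

Lemma sum_spread V s w (G : pt -> R) : NoDup V ->
  (forall p, (p < length s)%nat -> In (nth p s zero_pt) V) ->
  rsum (length V) (fun i => spread V s w i * G (nth i V zero_pt))
  = rsum (length s) (fun p => w p * G (nth p s zero_pt)).
Proof.
  intros HV Hs. unfold spread.
  rewrite (rsum_ext _ _ (fun i => rsum (length s)
    (fun p => w p * (ind_eq (nth i V zero_pt) (nth p s zero_pt) * G (nth i V zero_pt))))).
  - rewrite rsum_swap. apply rsum_ext. intros p Hp. rewrite rsum_scal. f_equal.
    destruct (In_nth V (nth p s zero_pt) zero_pt (Hs p Hp)) as [i0 [Hi0 <-]].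
    apply (sum_ind_eq V i0 (fun i => G (nth i V zero_pt))); auto.
  - intros. rewrite <- rsum_scalr. apply rsum_ext; intros. rewrite ind_eq_sym. ring.
Qed.

Lemma sum_restrict V s c (G : pt -> R) : NoDup s -> supported V c s ->
  rsum (length s) (fun p => restrict V s c p * G (nth p s zero_pt))
  = rsum (length V) (fun i => c i * G (nth i V zero_pt)).
Proof.
  intros Hs Hsup. unfold restrict.
  rewrite (rsum_ext _ _ (fun p => rsum (length V)
    (fun i => c i * (ind_eq (nth p s zero_pt) (nth i V zero_pt) * G (nth p s zero_pt))))).
  - rewrite rsum_swap. apply rsum_ext. intros i Hi. rewrite rsum_scal.
    destruct (Req_dec (c i) 0) as [->|E]; [ring|]. f_equal.
    destruct (In_nth s (nth i V zero_pt) zero_pt (Hsup i Hi E)) as [p0 [Hp0 <-]].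
    apply (sum_ind_eq s p0 (fun p => G (nth p s zero_pt))); auto.
  - intros. rewrite <- rsum_scalr. apply rsum_ext; intros. rewrite ind_eq_sym. ring.
Qed.

Lemma spread_supported V s w : supported V (spread V s w) s.
Proof.
  intros i Hi Hc. destruct (rsum_nonzero _ _ Hc) as [p [Hp Hf]].
  assert (E : ind_eq (nth p s zero_pt) (nth i V zero_pt) <> 0) by (intros E; apply Hf; rewrite E; ring).
  apply ind_eq_nonzero in E. rewrite <- E. apply nth_In; auto.
Qed.

Definition bary_rep (K : list (list pt)) (V : list pt) (x : pt) (c : nat -> R) : Prop :=
  exists s, In s K /\ supported V c s /\ (forall i, (i < length V)%nat -> 0 <= c i) /\
    rsum (length V) c = 1 /\ forall j, x j = rsum (length V) (fun i => c i * nth i V zero_pt j).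

Lemma bary_rep_bounds K V x c : bary_rep K V x c -> forall i, (i < length V)%nat -> 0 <= c i <= 1.
Proof.
  intros [s [_ [_ [Hnn [H1 _]]]] ] i Hi. split; auto.
  rewrite <- H1. apply (rsum_term_le _ c); auto.
Qed.

(* The barycentric coordinates of x (chosen; unique by bary_rep_unique). *)
Definition bary (K : list (list pt)) (V : list pt) (x : pt) : nat -> R :=
  match excluded_middle_informative (exists c, bary_rep K V x c) with
  | left H => proj1_sig (constructive_indefinite_description _ H)
  | right _ => fun _ => 0
  end.

Lemma spread_lip V s w w' i :
  Rabs (spread V s w i - spread V s w' i) <= rsum (length s) (fun p => Rabs (w p - w' p)).
Proof.
  unfold spread. rewrite <- rsum_minus. eapply Rle_trans; [apply rsum_abs|].
  apply rsum_le. intros p _. rewrite <- Rmult_minus_distr_l, Rabs_mult.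
  assert (Rabs (ind_eq (nth p s zero_pt) (nth i V zero_pt)) <= 1)
    by (unfold ind_eq; destruct (excluded_middle_informative _);
        rewrite ?Rabs_R1, ?Rabs_R0; lra).
  pose proof (Rabs_pos (w p - w' p)). nra.
Qed.

Section Barycentric.

Variables (N : nat) (K : list (list pt)) (V : list pt).
Hypothesis HV : vertex_list N K V.

Lemma simplex_aff_indep s : In s K -> aff_indep s.
Proof. intros Hs. apply (proj1 (proj1 HV) s Hs). Qed.

Lemma simplex_vertex_in_V s p : In s K -> (p < length s)%nat -> In (nth p s zero_pt) V.
Proof. intros Hs Hp. destruct HV as [_ [_ [HsV _]]]. apply (HsV s); auto. apply nth_In; auto. Qed.

Lemma vertex_in_RN i : in_RN N (nth i V zero_pt).
Proof.
  destruct (lt_dec i (length V)) as [Hi|Hi].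
  - destruct HV as [_ [_ [_ HVN]]]. apply HVN, nth_In; auto.
  - rewrite nth_overflow by lia. intros l _. reflexivity.
Qed.

Lemma simplex_vertex_in_RN s p : In s K -> in_RN N (nth p s zero_pt).
Proof.
  intros Hs. destruct (lt_dec p (length s)) as [Hp|Hp].
  - destruct (In_nth V _ zero_pt (simplex_vertex_in_V s p Hs Hp)) as [i [_ <-]].
    apply vertex_in_RN.
  - rewrite nth_overflow by lia. intros l _. reflexivity.
Qed.

Lemma polyhedron_in_RN x : polyhedron K x -> in_RN N x.
Proof.
  intros [s [Hs [w [_ [_ Hx]]]]] j Hj. rewrite Hx. apply rsum_zero. intros p Hp.
  rewrite (simplex_vertex_in_RN s p Hs j Hj). ring.
Qed.

Lemma conv_bary_rep s x w : In s K -> conv_weights s w x -> bary_rep K V x (spread V s w).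
Proof.
  intros Hs [Hw [Hw1 Hx]]. destruct HV as [_ [HVnd _]].
  pose proof (simplex_vertex_in_V s) as Hin.
  exists s. split; auto. split; [apply spread_supported|]. split; [|split].
  - intros. unfold spread. apply rsum_nonneg. intros.
    apply Rmult_le_pos; [apply ind_eq_nonneg|auto].
  - rewrite <- Hw1, (rsum_ext _ w (fun p => w p * 1)) by (intros; ring).
    rewrite <- (sum_spread V s w (fun _ => 1)) by auto. apply rsum_ext; intros; ring.
  - intros j. rewrite Hx. symmetry. apply (sum_spread V s w (fun v => v j)); auto.
Qed.

Lemma simplex_affine_unique s d : In s K -> supported V d s ->
  rsum (length V) d = 0 -> (forall j, rsum (length V) (fun i => d i * nth i V zero_pt j) = 0) ->
  forall i, (i < length V)%nat -> d i = 0.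
Proof.
  intros Hs Hsup Hd0 Hdj i Hi.
  assert (Hnd : NoDup s) by (apply aff_indep_nodup, simplex_aff_indep; auto).
  assert (Hzero : forall p, (p < length s)%nat -> restrict V s d p = 0).
  { apply (simplex_aff_indep s Hs).
    - rewrite <- Hd0, (rsum_ext (length V) d (fun i => d i * 1)) by (intros; ring).
      rewrite <- (sum_restrict V s d (fun _ => 1)) by auto. apply rsum_ext; intros; ring.
    - intros j. rewrite <- (Hdj j). apply (sum_restrict V s d (fun v => v j)); auto. }
  apply NNPP; intros E.
  destruct (In_nth s (nth i V zero_pt) zero_pt (Hsup i Hi E)) as [p0 [Hp0 Heq]].
  specialize (Hzero p0 Hp0). unfold restrict in Hzero. rewrite Heq in Hzero.
  rewrite (sum_ind_eq V i d) in Hzero; auto. apply HV.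
Qed.

Lemma bary_rep_same_simplex s c c' x : In s K -> supported V c s -> supported V c' s ->
  rsum (length V) c = 1 -> rsum (length V) c' = 1 ->
  (forall j, x j = rsum (length V) (fun i => c i * nth i V zero_pt j)) ->
  (forall j, x j = rsum (length V) (fun i => c' i * nth i V zero_pt j)) ->
  forall i, (i < length V)%nat -> c i = c' i.
Proof.
  intros Hs Hc Hc' H1 H1' Hx Hx' i Hi.
  enough (c i - c' i = 0) by lra.
  apply (simplex_affine_unique s (fun i => c i - c' i)); auto.
  - intros k Hk Hd. destruct (Req_dec (c k) 0) as [E|E]; [apply Hc'|apply Hc]; auto.
    intros E'. apply Hd. lra.
  - rewrite rsum_minus. lra.
  - intros j. rewrite (rsum_ext _ _ (fun i => c i * nth i V zero_pt j - c' i * nth i V zero_pt j))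
      by (intros; ring).
    rewrite rsum_minus, <- Hx, <- Hx'. ring.
Qed.

Lemma bary_rep_conv s c x : In s K -> supported V c s ->
  (forall i, (i < length V)%nat -> 0 <= c i) -> rsum (length V) c = 1 ->
  (forall j, x j = rsum (length V) (fun i => c i * nth i V zero_pt j)) -> conv s x.
Proof.
  intros Hs Hsup Hnn H1 Hx.
  assert (Hnd : NoDup s) by (apply aff_indep_nodup, simplex_aff_indep; auto).
  exists (restrict V s c). split; [|split].
  - intros. unfold restrict. apply rsum_nonneg. intros.
    apply Rmult_le_pos; [apply ind_eq_nonneg|auto].
  - rewrite <- H1, (rsum_ext (length V) c (fun i => c i * 1)) by (intros; ring).
    rewrite <- (sum_restrict V s c (fun _ => 1)) by auto. apply rsum_ext; intros; ring.
  - intros j. rewrite Hx. symmetry. apply (sum_restrict V s c (fun v => v j)); auto.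
Qed.

(* Barycentric coordinates are unique: representations on simplices s and t
   both agree with the one on the common face of s and t. *)
Lemma bary_rep_unique x c c' : bary_rep K V x c -> bary_rep K V x c' ->
  forall i, (i < length V)%nat -> c i = c' i.
Proof.
  intros [s [Hs [Hsup [Hnn [H1 Hx]]]]] [t [Ht [Htsup [Htnn [Ht1 Htx]]]]] i Hi.
  destruct (proj2 (proj2 (proj1 HV)) s t Hs Ht) as [u [Hu Hux]].
  destruct (proj1 (Hux x) (conj (bary_rep_conv s c x Hs Hsup Hnn H1 Hx)
                                (bary_rep_conv t c' x Ht Htsup Htnn Ht1 Htx)))
    as [e [_ [He1 Hex]]].
  assert (Hin : forall p, (p < length u)%nat -> In (nth p u zero_pt) V).
  { intros p Hp. apply (proj1 (proj2 (proj2 HV)) s); auto. apply Hu, nth_In; auto. }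
  set (c0 := spread V u e).
  assert (Hsum : rsum (length V) c0 = 1).
  { rewrite <- He1, (rsum_ext (length u) e (fun p => e p * 1)) by (intros; ring).
    rewrite <- (sum_spread V u e (fun _ => 1)) by (auto; apply HV).
    apply rsum_ext; intros; unfold c0; ring. }
  assert (Hrep : forall j, x j = rsum (length V) (fun i => c0 i * nth i V zero_pt j)).
  { intros j. rewrite Hex. symmetry. apply (sum_spread V u e (fun v => v j)); auto. apply HV. }
  assert (Hface : forall s0, (forall v, In v u -> In v s0) -> supported V c0 s0).
  { intros s0 Hs0 k Hk Hck. apply Hs0, (spread_supported V u e); auto. }
  rewrite (bary_rep_same_simplex s c c0 x), (bary_rep_same_simplex t c' c0 x); auto;
    apply Hface; intros v Hv; apply Hu; auto.
Qed.

Lemma bary_spec x : polyhedron K x -> bary_rep K V x (bary K V x).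
Proof.
  intros [s [Hs [w Hw]]]. unfold bary.
  destruct (excluded_middle_informative _) as [H|H].
  - apply (proj2_sig (constructive_indefinite_description _ H)).
  - exfalso. apply H. eexists. apply (conv_bary_rep s x w Hs Hw).
Qed.

Lemma bary_eq x c : bary_rep K V x c -> forall i, (i < length V)%nat -> bary K V x i = c i.
Proof.
  intros Hc. apply (bary_rep_unique x); auto. apply bary_spec.
  destruct Hc as [s [Hs [Hsup [Hnn [H1 Hx]]]]]. exists s.
  split; auto. eapply bary_rep_conv; eauto.
Qed.

Lemma bary_on_simplex s (lam : nat -> pt -> R) z i : In s K ->
  (forall x w, rsum (length s) w = 1 ->
     (forall j, x j = rsum (length s) (fun r => w r * nth r s zero_pt j)) ->
     forall p, (p < length s)%nat -> lam p x = w p) ->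
  conv s z -> (i < length V)%nat -> bary K V z i = spread V s (fun p => lam p z) i.
Proof.
  intros Hs Hcoord [w Hw] Hi. pose proof Hw as [_ [Hw1 Hz]].
  rewrite (bary_eq z (spread V s w)) by (auto; apply conv_bary_rep; auto).
  unfold spread. apply rsum_ext. intros p Hp. rewrite (Hcoord z w); auto.
Qed.

(* Barycentric coordinates are continuous on the polyhedron: a point y near x
   lies in a simplex s which either contains x, where bary is Lipschitz, or
   is at positive distance from x, since simplices are closed. *)
Lemma bary_cont x : polyhedron K x -> forall i, (i < length V)%nat ->
  forall eps, 0 < eps -> exists d, 0 < d /\ forall y, polyhedron K y -> dist N x y < d ->
    Rabs (bary K V y i - bary K V x i) < eps.
Proof.
  intros Hx i Hi eps Heps.
  destruct (list_delta _ K (fun s d => forall y, conv s y -> dist N x y < d ->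
              Rabs (bary K V y i - bary K V x i) < eps)) as [d [Hd HP]].
  - intros s d d' H [_ Hd'] y Hy Hdy. apply H; auto. lra.
  - intros s Hs.
    destruct (affine_coords N s (simplex_aff_indep s Hs)
                (fun p => simplex_vertex_in_RN s p Hs)) as [lam [C [HC [Hlip Hcoord]]]].
    destruct (classic (conv s x)) as [Cx|Cx].
    + assert (HL : 0 <= INR (length s) * C) by (apply Rmult_le_pos; [apply pos_INR|auto]).
      destruct (lipschitz_delta _ eps HL Heps) as [d [Hd HLd]].
      exists d. split; auto. intros y Cy Hdy.
      rewrite (bary_on_simplex s lam y), (bary_on_simplex s lam x) by auto.
      eapply Rle_lt_trans; [apply spread_lip|].
      eapply Rle_lt_trans.
      { apply rsum_le with (g := fun p => Rabs (lam p x - lam p y)). intros.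
        rewrite Rabs_minus_sym. lra. }
      eapply Rle_lt_trans; [apply (lam_sum_lip N s lam C Hlip)|].
      apply HLd; auto. apply dist_nonneg.
    + destruct (conv_closed N s lam C (fun p => simplex_vertex_in_RN s p Hs) HC Hlip Hcoord x
                  (polyhedron_in_RN x Hx) Cx) as [d [Hd Hn]].
      exists d. split; auto. intros y Cy Hy. exfalso. eapply Hn; eauto.
  - exists d. split; auto. intros y [s [Hs Cy]] Hy. eapply HP; eauto.
Qed.

End Barycentric.

(** * Coordinates on the cone *)

(* A cone point y = (1-t) x + t e_N determines its base point x (if t < 1). *)
Definition cone_base (N : nat) (y : pt) : pt :=
  fun j => if Nat.ltb j N then y j / (1 - y N) else 0.

(* The cone coordinates (1-t) bary(x) of y: nonnegative weights on the
   vertices, of total mass 1-t, with y = t e_N + sum_i nu_i v_i. *)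
Definition cone_coords (N : nat) (K : list (list pt)) (V : list pt) (y : pt) (i : nat) : R :=
  (1 - y N) * bary K V (cone_base N y) i.

Lemma div_diff_bound a b u u' : 0 < u -> u / 2 <= u' ->
  Rabs (a / u - b / u') <= (2 / u) * Rabs (a - b) + (2 / (u * u)) * Rabs a * Rabs (u - u').
Proof.
  intros Hu Hu'.
  replace (a / u - b / u') with ((a - b) * / u' + a * (u' - u) * / (u * u')) by (field; lra).
  eapply Rle_trans; [apply Rabs_triang|]. rewrite !Rabs_mult.
  rewrite (Rabs_right (/ u')) by (apply Rle_ge, Rlt_le, Rinv_0_lt_compat; lra).
  rewrite (Rabs_right (/ (u * u'))) by (apply Rle_ge, Rlt_le, Rinv_0_lt_compat; nra).
  rewrite (Rabs_minus_sym u' u).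
  assert (Hinv1 : / u' <= 2 / u).
  { apply (Rmult_le_reg_l u'); [lra|]. rewrite Rinv_r by lra.
    replace (u' * (2 / u)) with (2 * u' / u) by (field; lra).
    apply (Rmult_le_reg_l u); auto. replace (u * (2 * u' / u)) with (2 * u') by (field; lra). lra. }
  assert (Hinv2 : / (u * u') <= 2 / (u * u)).
  { rewrite Rinv_mult. replace (2 / (u * u)) with (/ u * (2 / u)) by (field; lra).
    apply Rmult_le_compat_l; [left; apply Rinv_0_lt_compat|]; auto. }
  pose proof (Rabs_pos (a - b)). pose proof (Rabs_pos a) as Ha. pose proof (Rabs_pos (u - u')) as Hd.
  pose proof (Rmult_le_pos _ _ Ha Hd). nra.
Qed.

Section Cone.

Variables (N : nat) (K : list (list pt)) (V : list pt).
Hypothesis HV : vertex_list N K V.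

Lemma cone_base_eq x t y : polyhedron K x -> y N = t -> t < 1 ->
  (forall i, (i < N)%nat -> y i = (1 - t) * x i) -> cone_base N y = x.
Proof.
  intros Hx HyN Ht Hlow. apply functional_extensionality. intros j. unfold cone_base.
  destruct (Nat.ltb j N) eqn:E.
  - apply Nat.ltb_lt in E. rewrite Hlow, HyN by auto. field. lra.
  - apply Nat.ltb_ge in E. symmetry. apply (polyhedron_in_RN N K V HV x); auto.
Qed.

Lemma cone_coords_spec y : cone N (polyhedron K) y ->
  (forall i, (i < length V)%nat -> 0 <= cone_coords N K V y i <= 1) /\
  rsum (length V) (cone_coords N K V y) = 1 - y N /\
  (forall l, (l < N)%nat ->
     y l = rsum (length V) (fun i => cone_coords N K V y i * nth i V zero_pt l)) /\
  exists s, In s K /\ supported V (cone_coords N K V y) s.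
Proof.
  intros [x [t [Hx [Ht [HyN [Hlow _]]]]]].
  destruct (Req_dec t 1) as [E|E].
  { assert (Hz : forall i, cone_coords N K V y i = 0)
      by (intros; unfold cone_coords; rewrite HyN, E; ring).
    split; [|split; [|split]]; auto.
    - intros. rewrite Hz; lra.
    - rewrite rsum_zero by auto. rewrite HyN, E; ring.
    - intros. rewrite Hlow, E, rsum_zero by (auto; intros; rewrite Hz; ring). ring.
    - destruct Hx as [s [Hs _]]. exists s. split; auto. intros i _ Hi. exfalso; apply Hi, Hz. }
  unfold cone_coords.
  rewrite (cone_base_eq x t y) by (auto; lra). rewrite HyN.
  pose proof (bary_spec N K V HV x Hx) as Hc.
  pose proof (bary_rep_bounds _ _ _ _ Hc) as Hb.
  destruct Hc as [s [Hs [Hsup [_ [H1 Hxr]]]]].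
  split; [|split; [|split]].
  - intros i Hi. specialize (Hb i Hi). split; [apply Rmult_le_pos; lra|].
    assert ((1 - t) * bary K V x i <= 1 * 1) by (apply Rmult_le_compat; lra). lra.
  - rewrite rsum_scal, H1. ring.
  - intros l Hl. rewrite Hlow, Hxr by auto. rewrite <- rsum_scal. apply rsum_ext; intros; ring.
  - exists s. split; auto. intros i Hi Hne. apply Hsup; auto. intros E0. apply Hne.
    rewrite E0. ring.
Qed.

Lemma cone_height_close y y' : Rabs (y N - y' N) <= dist (N + 1) y y'.
Proof. apply coord_le_dist. lia. Qed.

Lemma cone_base_close x t y x' t' y' : t < 1 ->
  y N = t -> (forall i, (i < N)%nat -> y i = (1 - t) * x i) ->
  y' N = t' -> (forall i, (i < N)%nat -> y' i = (1 - t') * x' i) ->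
  dist (N + 1) y y' < (1 - t) / 2 ->
  dist N x x' <= (2 / (1 - t) + 2 / ((1 - t) * (1 - t)) * rsum N (fun l => Rabs (y l)))
                 * dist (N + 1) y y'.
Proof.
  intros Ht HyN Hlow Hy'N Hlow' Hd. set (u := 1 - t) in *. set (d := dist (N + 1) y y') in *.
  assert (Hu : 0 < u) by (unfold u; lra).
  assert (Htt : Rabs (u - (1 - t')) <= d).
  { unfold u. replace (1 - t - (1 - t')) with (y' N - y N) by (rewrite HyN, Hy'N; ring).
    rewrite Rabs_minus_sym. apply cone_height_close. }
  assert (Hu' : u / 2 <= 1 - t') by (unfold Rabs in Htt; destruct (Rcase_abs (u - (1 - t'))); lra).
  apply Rle_trans with
    (rsum N (fun l => (2 / u) * Rabs (y l - y' l) + (2 / (u * u)) * Rabs (y l) * d)).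
  - apply rsum_le. intros l Hl.
    assert (Hxl : x l = y l / u) by (rewrite Hlow by auto; field; lra).
    assert (Hx'l : x' l = y' l / (1 - t')) by (rewrite Hlow' by auto; field; lra).
    rewrite Hxl, Hx'l.
    eapply Rle_trans; [apply div_diff_bound; auto|].
    apply Rplus_le_compat_l, Rmult_le_compat_l; auto.
    apply Rmult_le_pos; [left; apply Rdiv_lt_0_compat; nra|apply Rabs_pos].
  - rewrite rsum_plus, rsum_scal.
    rewrite (rsum_ext N (fun l => 2 / (u * u) * Rabs (y l) * d)
               (fun l => (2 / (u * u) * d) * Rabs (y l))) by (intros; ring).
    rewrite rsum_scal. pose proof (dist_le_succ N y y') as Hle. fold d in Hle.
    assert (0 < 2 / u) by (apply Rdiv_lt_0_compat; lra). unfold dist in Hle |- *. nra.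
Qed.

(* Near the apex all cone coordinates are small: nu_i(y') <= 1 - y'_N. *)
Lemma cone_coords_apex y y' i : cone N (polyhedron K) y -> y N = 1 ->
  cone N (polyhedron K) y' -> (i < length V)%nat ->
  Rabs (cone_coords N K V y' i - cone_coords N K V y i) <= dist (N + 1) y y'.
Proof.
  intros Hy HyN Hy' Hi. destruct (cone_coords_spec y' Hy') as [Hb [Hs _]].
  assert (Hz : cone_coords N K V y i = 0) by (unfold cone_coords; rewrite HyN; ring).
  assert (Hle : cone_coords N K V y' i <= 1 - y' N).
  { rewrite <- Hs. apply (rsum_term_le _ (cone_coords N K V y')); auto.
    intros; apply Hb; auto. }
  pose proof (cone_height_close y y') as Hh. rewrite HyN in Hh. specialize (Hb i Hi).
  rewrite Hz, Rminus_0_r, Rabs_right by lra. unfold Rabs in Hh.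
  destruct (Rcase_abs (1 - y' N)); lra.
Qed.

(* Away from the apex: nu_i(y') - nu_i(y) = (t - t') mu_i(x') + (1 - t)(mu_i(x') - mu_i(x)). *)
Lemma cone_coords_diff x t y x' t' y' i : polyhedron K x -> polyhedron K x' ->
  y N = t -> t < 1 -> (forall l, (l < N)%nat -> y l = (1 - t) * x l) ->
  y' N = t' -> t' < 1 -> (forall l, (l < N)%nat -> y' l = (1 - t') * x' l) ->
  0 <= t -> (i < length V)%nat ->
  Rabs (cone_coords N K V y' i - cone_coords N K V y i)
  <= Rabs (t - t') + Rabs (bary K V x' i - bary K V x i).
Proof.
  intros Hx Hx' HyN Ht Hlow Hy'N Ht' Hlow' Ht0 Hi.
  pose proof (bary_rep_bounds _ _ _ _ (bary_spec N K V HV x' Hx') i Hi) as Hb'.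
  unfold cone_coords. rewrite (cone_base_eq x t y), (cone_base_eq x' t' y'), HyN, Hy'N by auto.
  replace ((1 - t') * bary K V x' i - (1 - t) * bary K V x i) with
    ((t - t') * bary K V x' i + (1 - t) * (bary K V x' i - bary K V x i)) by ring.
  eapply Rle_trans; [apply Rabs_triang|]. rewrite !Rabs_mult.
  rewrite (Rabs_right (bary K V x' i)), (Rabs_right (1 - t)) by lra.
  pose proof (Rabs_pos (bary K V x' i - bary K V x i)). pose proof (Rabs_pos (t - t')).
  assert (Rabs (t - t') * bary K V x' i <= Rabs (t - t')) by nra.
  assert ((1 - t) * Rabs (bary K V x' i - bary K V x i) <= Rabs (bary K V x' i - bary K V x i))
    by nra.
  lra.
Qed.

Lemma cone_coords_cont y : cone N (polyhedron K) y -> forall i, (i < length V)%nat ->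
  forall eps, 0 < eps -> exists d, 0 < d /\ forall y', cone N (polyhedron K) y' ->
    dist (N + 1) y y' < d -> Rabs (cone_coords N K V y' i - cone_coords N K V y i) < eps.
Proof.
  intros Hy i Hi eps Heps. pose proof Hy as [x [t [Hx [Ht [HyN [Hlow _]]]]]].
  destruct (Req_dec t 1) as [E|E].
  { exists eps. split; auto. intros y' Hy' Hd.
    eapply Rle_lt_trans; [apply cone_coords_apex|]; auto. congruence. }
  assert (Ht1 : t < 1) by lra. set (u := 1 - t). assert (Hu : 0 < u) by (unfold u; lra).
  destruct (bary_cont N K V HV x Hx i Hi (eps / 2)) as [d1 [Hd1 Hbary]]; [lra|].
  set (Kc := 2 / u + 2 / (u * u) * rsum N (fun l => Rabs (y l))).
  assert (HKc : 0 <= Kc).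
  { unfold Kc. assert (0 < 2 / u) by (apply Rdiv_lt_0_compat; lra).
    assert (0 < 2 / (u * u)) by (apply Rdiv_lt_0_compat; nra).
    assert (0 <= rsum N (fun l => Rabs (y l))) by (apply rsum_nonneg; intros; apply Rabs_pos).
    nra. }
  destruct (lipschitz_delta Kc d1 HKc Hd1) as [d2 [Hd2 HKd]].
  exists (Rmin (u / 2) (Rmin (eps / 2) d2)).
  split; [repeat apply Rmin_pos; lra|].
  intros y' Hy' Hd. pose proof Hy' as [x' [t' [Hx' [_ [Hy'N [Hlow' _]]]]]].
  set (d := dist (N + 1) y y') in *.
  assert (Hdu : d < u / 2) by (eapply Rlt_le_trans; [apply Hd|apply Rmin_l]).
  assert (Hde : d < eps / 2)
    by (eapply Rlt_le_trans; [apply Hd|]; eapply Rle_trans; [apply Rmin_r|apply Rmin_l]).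
  assert (Hd2' : d < d2)
    by (eapply Rlt_le_trans; [apply Hd|]; eapply Rle_trans; [apply Rmin_r|apply Rmin_r]).
  assert (Htt : Rabs (t - t') <= d) by (rewrite <- HyN, <- Hy'N; apply cone_height_close).
  assert (Ht'1 : t' < 1)
    by (unfold Rabs in Htt; destruct (Rcase_abs (t - t')); unfold u in Hdu; lra).
  assert (Hxx' : dist N x x' < d1).
  { eapply Rle_lt_trans; [apply (cone_base_close x t y x' t' y'); auto|].
    apply HKd; auto. apply dist_nonneg. }
  specialize (Hbary x' Hx' Hxx').
  eapply Rle_lt_trans; [apply (cone_coords_diff x t y x' t' y'); auto; lra|]. lra.
Qed.

End Cone.

(** * The embedding and its inverse *)

Definition apex (N : nat) : pt := fun l => if Nat.eqb l N then 1 else 0.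

(* sum_{i in j} (v_i - e_N): the image of the unit vector of slot j. *)
Definition subset_dir (N : nat) (V : list pt) (j : nat) : pt := fun l =>
  rsum (length V) (fun i => if Nat.testbit j i then nth i V zero_pt l - apex N l else 0).

(* f(y): the layer of the subset j of vertices, placed in slot j of factor
   |j| - 1 of the product of n+1 copies of the 2^q-od. *)
Definition od_map (N n : nat) (K : list (list pt)) (V : list pt) (y : pt) : pt := fun p =>
  if Nat.ltb p (2 ^ length V * (n + 1)) then
    if Nat.eqb (card_bits (length V) (p mod 2 ^ length V)) (S (p / 2 ^ length V))
    then layer (cone_coords N K V y) (length V) (p mod 2 ^ length V) else 0
  else 0.

(* g(z) = e_N + sum_p z_p subset_dir(slot of p): an affine left inverse of f. *)
Definition od_inv (N n : nat) (V : list pt) (z : pt) : pt := fun l =>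
  apex N l + rsum (2 ^ length V * (n + 1)) (fun p => z p * subset_dir N V (p mod 2 ^ length V) l).

Lemma divmod_block k m j : (j < m)%nat -> ((k * m + j) / m = k /\ (k * m + j) mod m = j)%nat.
Proof.
  intros Hj. split.
  - rewrite Nat.div_add_l, Nat.div_small by lia. lia.
  - rewrite Nat.add_comm, Nat.Div0.mod_add. apply Nat.mod_small; auto.
Qed.

(* Layer-cake identity applied to the directions: the layers recombine to
   sum_i nu_i (v_i - e_N). *)
Lemma layer_sum_dir N V nu l : (forall i, (i < length V)%nat -> 0 <= nu i <= 1) ->
  rsum (2 ^ length V) (fun j => layer nu (length V) j * subset_dir N V j l)
  = rsum (length V) (fun i => nu i * (nth i V zero_pt l - apex N l)).
Proof.
  intros Hnu. unfold subset_dir.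
  rewrite (rsum_ext _ _ (fun j => rsum (length V) (fun i =>
    (if Nat.testbit j i then layer nu (length V) j else 0) * (nth i V zero_pt l - apex N l))))
    by (intros; rewrite <- rsum_scal; apply rsum_ext; intros; destruct (Nat.testbit _ _); ring).
  rewrite rsum_swap. apply rsum_ext. intros i Hi. rewrite rsum_scalr, layer_cake; auto.
Qed.

Lemma sum_size_slot n c X : rsum (S n) (fun k => if Nat.eqb c (S k) then X else 0) =
  if andb (Nat.leb 1 c) (Nat.leb c (S n)) then X else 0.
Proof.
  destruct (andb (Nat.leb 1 c) (Nat.leb c (S n))) eqn:E.
  - apply Bool.andb_true_iff in E. destruct E as [E1 E2]. apply Nat.leb_le in E1, E2.
    rewrite (rsum_single _ _ (c - 1)%nat) by
      (try lia; intros k Hk Hne; replace (Nat.eqb c (S k)) with false;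
       auto; symmetry; apply Nat.eqb_neq; lia).
    replace (Nat.eqb c (S (c - 1))) with true; auto. symmetry; apply Nat.eqb_eq; lia.
  - apply rsum_zero. intros k Hk. destruct (Nat.eqb c (S k)) eqn:E'; auto.
    apply Nat.eqb_eq in E'. apply Bool.andb_false_iff in E.
    destruct E as [E|E]; apply Nat.leb_gt in E; lia.
Qed.

Section Maps.

Variables (N n : nat) (K : list (list pt)) (V : list pt).
Hypothesis HV : vertex_list N K V.
Hypothesis Hdim : complex_dim K n.

Let q := length V.
Let m := (2 ^ q)%nat.

Lemma od_map_slot y k i : (k <= n)%nat -> (i < m)%nat ->
  od_map N n K V y (k * m + i)%nat =
  if Nat.eqb (card_bits q i) (S k) then layer (cone_coords N K V y) q i else 0.
Proof.
  intros Hk Hi. unfold od_map. fold q m. destruct (divmod_block k m i Hi) as [-> ->].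
  replace (Nat.ltb (k * m + i)%nat (m * (n + 1))) with true; auto.
  symmetry; apply Nat.ltb_lt; nia.
Qed.

(* A vertex set of positive layer lies in one simplex, so it has at most n+1
   elements. *)
Lemma layer_card_bound y j : cone N (polyhedron K) y ->
  0 < layer (cone_coords N K V y) q j -> (card_bits q j <= S n)%nat.
Proof.
  intros Hy Hpos. destruct (cone_coords_spec N K V HV y Hy) as [_ [_ [_ [s [Hs Hsup]]]]].
  assert (Hnd : NoDup s) by (apply aff_indep_nodup, (simplex_aff_indep N K V HV); auto).
  assert (Hcard : INR (card_bits q j) <= INR (length s)).
  { set (ind := spread V s (fun _ => 1)).
    replace (INR (length s)) with (rsum q (fun a => ind a * 1)).
    - apply (card_bits_le q j (fun a => ind a * 1)).
      + intros a Ha Hbit. rewrite Rmult_1_r.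
        destruct (In_nth s (nth a V zero_pt) zero_pt) as [p0 [Hp0 Heq]].
        { apply Hsup; auto. pose proof (layer_pos_bit _ _ _ _ Hpos Ha Hbit). lra. }
        unfold ind, spread. rewrite <- Heq. apply (sum_ind_eq s p0 (fun _ => 1)); auto.
      + intros a. rewrite Rmult_1_r. apply rsum_nonneg. intros.
        rewrite Rmult_1_r. apply ind_eq_nonneg.
    - unfold ind, q.
      rewrite (sum_spread V s (fun _ => 1) (fun _ => 1)), rsum_const; [ring|apply HV|].
      intros; apply (simplex_vertex_in_V N K V HV); auto. }
  apply INR_le in Hcard. pose proof (proj2 Hdim s Hs). lia.
Qed.

(* f maps the cone into the product of n+1 copies of the m-od: in each factor
   at most one slot is nonzero, as the subsets of positive layer form a chain. *)
Lemma od_map_in_prod y : cone N (polyhedron K) y -> od_prod m n (od_map N n K V y).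
Proof.
  intros Hy. split.
  - intros p Hp. unfold od_map. fold q m.
    replace (Nat.ltb p (m * (n + 1))) with false; auto. symmetry; apply Nat.ltb_ge; auto.
  - intros k Hk. unfold od_block.
    destruct (classic (exists i0, (i0 < m)%nat /\ od_map N n K V y (k * m + i0)%nat <> 0))
      as [[i0 [Hi0 Hne]]|Hno].
    + right. exists i0, (od_map N n K V y (k * m + i0)%nat). split; auto. split.
      * rewrite od_map_slot by auto. destruct (Nat.eqb _ _); [apply layer_range|lra].
      * intros i Hi. destruct (Nat.eqb i i0) eqn:E; [apply Nat.eqb_eq in E; subst; auto|].
        apply Nat.eqb_neq in E. apply NNPP. intros Hne2. rewrite od_map_slot in Hne, Hne2 by auto.
        destruct (Nat.eqb (card_bits q i0) (S k)) eqn:E0; [|lra].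
        destruct (Nat.eqb (card_bits q i) (S k)) eqn:E1; [|lra].
        apply Nat.eqb_eq in E0, E1.
        pose proof (layer_range (cone_coords N K V y) q i).
        pose proof (layer_range (cone_coords N K V y) q i0).
        apply (layer_chain (cone_coords N K V y) q i i0); auto; try lia; lra.
    + left. intros i Hi. apply NNPP. intros Hne. apply Hno. eauto.
Qed.

(* Only the slots of the right size carry weight, and every subset of positive
   layer has such a slot, so the sum in g (f y) is a sum over all subsets. *)
Lemma od_inv_collapse y l : cone N (polyhedron K) y ->
  rsum (m * (n + 1)) (fun p => od_map N n K V y p * subset_dir N V (p mod m) l)
  = rsum m (fun j => layer (cone_coords N K V y) q j * subset_dir N V j l).
Proof.
  intros Hy. set (nu := cone_coords N K V y).
  rewrite rsum_blocks.
  rewrite (rsum_ext _ _ (fun k => rsum m (fun j =>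
    if Nat.eqb (card_bits q j) (S k) then layer nu q j * subset_dir N V j l else 0))).
  - rewrite rsum_swap. apply rsum_ext. intros j Hj.
    replace (n + 1)%nat with (S n) by lia. rewrite sum_size_slot.
    destruct (andb (Nat.leb 1 (card_bits q j)) (Nat.leb (card_bits q j) (S n))) eqn:E; auto.
    apply Bool.andb_false_iff in E. destruct E as [E|E]; apply Nat.leb_gt in E.
    + replace (subset_dir N V j l) with 0; [ring|]. symmetry. unfold subset_dir.
      apply rsum_zero. intros i Hi. rewrite (card_bits_zero q j) by (auto; lia). auto.
    + destruct (Rle_lt_or_eq_dec 0 (layer nu q j) (proj1 (layer_range nu q j))) as [Hpos|E0].
      * pose proof (layer_card_bound y j Hy Hpos). lia.
      * rewrite <- E0. ring.
  - intros k Hk. apply rsum_ext. intros j Hj.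
    rewrite od_map_slot by (auto; lia). destruct (divmod_block k m j Hj) as [_ ->].
    destruct (Nat.eqb (card_bits q j) (S k)); unfold nu; ring.
Qed.

Lemma od_inv_od_map y : cone N (polyhedron K) y -> forall l, od_inv N n V (od_map N n K V y) l = y l.
Proof.
  intros Hy l. destruct (cone_coords_spec N K V HV y Hy) as [Hb [Hsum [Hrep _]]].
  unfold od_inv. fold q m. rewrite od_inv_collapse by auto.
  unfold m, q. rewrite layer_sum_dir by auto.
  rewrite (rsum_ext _ _ (fun i => cone_coords N K V y i * nth i V zero_pt l
                                 - apex N l * cone_coords N K V y i)) by (intros; ring).
  rewrite rsum_minus, rsum_scal, Hsum. unfold apex.
  destruct (Nat.eqb l N) eqn:E.
  - apply Nat.eqb_eq in E. subst l.
    rewrite rsum_zero by (intros i _; rewrite (vertex_in_RN N K V HV i N) by lia; ring). ring.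
  - apply Nat.eqb_neq in E. destruct (lt_dec l N) as [Hl|Hl].
    + rewrite (Hrep l Hl). ring.
    + rewrite rsum_zero by (intros i _; rewrite (vertex_in_RN N K V HV i l) by lia; ring).
      destruct Hy as [x [t [_ [_ [_ [_ Hhigh]]]]]]. rewrite (Hhigh l) by lia. ring.
Qed.

End Maps.

Lemma od_inv_lip N n V z z' :
  dist (N + 1) (od_inv N n V z) (od_inv N n V z') <=
  rsum (N + 1) (fun l => rsum (2 ^ length V * (n + 1))
                  (fun p => Rabs (subset_dir N V (p mod 2 ^ length V) l)))
  * dist (2 ^ length V * (n + 1)) z z'.
Proof.
  set (M := (2 ^ length V * (n + 1))%nat). set (dir := fun p => subset_dir N V (p mod 2 ^ length V)).
  unfold dist at 1. rewrite <- rsum_scalr. apply rsum_le. intros l Hl.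
  assert (E : od_inv N n V z l - od_inv N n V z' l = rsum M (fun p => (z p - z' p) * dir p l)).
  { unfold od_inv. fold M.
    rewrite (rsum_ext M (fun p => (z p - z' p) * dir p l)
               (fun p => z p * dir p l - z' p * dir p l)) by (intros; ring).
    rewrite rsum_minus. unfold dir. ring. }
  rewrite E. eapply Rle_trans; [apply rsum_abs|]. rewrite <- rsum_scalr.
  apply rsum_le. intros p Hp. rewrite Rabs_mult, Rmult_comm.
  apply Rmult_le_compat_l; [apply Rabs_pos|apply coord_le_dist; auto].
Qed.

Lemma od_map_lip N n K V y y' :
  dist (2 ^ length V * (n + 1)) (od_map N n K V y) (od_map N n K V y') <=
  INR (2 ^ length V * (n + 1)) *
    (2 * rsum (length V) (fun i => Rabs (cone_coords N K V y i - cone_coords N K V y' i))).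
Proof.
  unfold dist. rewrite <- rsum_const. apply rsum_le. intros p _.
  assert (0 <= rsum (length V) (fun i => Rabs (cone_coords N K V y i - cone_coords N K V y' i)))
    by (apply rsum_nonneg; intros; apply Rabs_pos).
  unfold od_map. destruct (Nat.ltb _ _); [destruct (Nat.eqb _ _); [apply layer_lip|]|];
    rewrite Rminus_diag, Rabs_R0; lra.
Qed.

Section Embedding.

Variables (N n : nat) (K : list (list pt)) (V : list pt).
Hypothesis HV : vertex_list N K V.
Hypothesis Hdim : complex_dim K n.

Lemma od_map_injective y y' : cone N (polyhedron K) y -> cone N (polyhedron K) y' ->
  (forall p, od_map N n K V y p = od_map N n K V y' p) -> forall l, y l = y' l.
Proof.
  intros Hy Hy' Heq l.
  rewrite <- (od_inv_od_map N n K V HV Hdim y Hy), <- (od_inv_od_map N n K V HV Hdim y' Hy').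
  replace (od_map N n K V y) with (od_map N n K V y') by (apply functional_extensionality; auto).
  reflexivity.
Qed.

Lemma od_map_cont y : cone N (polyhedron K) y -> forall eps, 0 < eps -> exists d, 0 < d /\
  forall y', cone N (polyhedron K) y' -> dist (N + 1) y y' < d ->
    dist (2 ^ length V * (n + 1)) (od_map N n K V y) (od_map N n K V y') < eps.
Proof.
  intros Hy eps Heps. set (M := INR (2 ^ length V * (n + 1))).
  assert (HM : 0 <= M * 2) by (pose proof (pos_INR (2 ^ length V * (n + 1))); unfold M; lra).
  destruct (lipschitz_delta (M * 2) eps HM Heps) as [e [He HMe]].
  destruct (sum_cont (length V) (cone_coords N K V) (cone N (polyhedron K))
              (fun y' => dist (N + 1) y y') y
              (fun i Hi => cone_coords_cont N K V HV y Hy i Hi) e He) as [d [Hd Hc]].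
  exists d. split; auto. intros y' Hy' Hdy.
  eapply Rle_lt_trans; [apply od_map_lip|]. fold M. rewrite <- Rmult_assoc.
  apply HMe; [apply rsum_nonneg; intros; apply Rabs_pos|auto].
Qed.

(* The inverse of f is continuous on the image: it is the restriction of g. *)
Lemma od_map_inv_cont y : cone N (polyhedron K) y -> forall eps, 0 < eps -> exists d, 0 < d /\
  forall y', cone N (polyhedron K) y' ->
    dist (2 ^ length V * (n + 1)) (od_map N n K V y) (od_map N n K V y') < d ->
    dist (N + 1) y y' < eps.
Proof.
  intros Hy eps Heps.
  set (Cg := rsum (N + 1) (fun l => rsum (2 ^ length V * (n + 1))
                  (fun p => Rabs (subset_dir N V (p mod 2 ^ length V) l)))).
  destruct (lipschitz_delta Cg eps) as [d [Hd HCd]]; auto.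
  { apply rsum_nonneg; intros; apply rsum_nonneg; intros; apply Rabs_pos. }
  exists d. split; auto. intros y' Hy' Hdy.
  replace (dist (N + 1) y y') with
    (dist (N + 1) (od_inv N n V (od_map N n K V y)) (od_inv N n V (od_map N n K V y'))).
  - eapply Rle_lt_trans; [apply od_inv_lip|]. apply HCd; auto. apply dist_nonneg.
  - unfold dist. apply rsum_ext. intros l _. rewrite !(od_inv_od_map N n K V HV Hdim); auto.
Qed.

End Embedding.

(* The embedding is f, with m = 2^q for q the number of vertices of K. *)
Theorem mainTheorem15 :
  forall (N n : nat) (K : list (list pt)),
    is_complex N K -> complex_dim K n ->
    exists m : nat,
      embeds (N + 1) (cone N (polyhedron K)) (m * (n + 1)) (od_prod m n).
Proof.
  intros N n K HK Hdim. destruct (vertex_list_exists N K HK) as [V HV].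
  exists (2 ^ length V)%nat, (od_map N n K V). split; [|split; [|split]].
  - intros y Hy. apply od_map_in_prod; auto.
  - apply (od_map_injective N n K V HV Hdim).
  - apply (od_map_cont N n K V HV).
  - apply (od_map_inv_cont N n K V HV Hdim).
Qed.
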